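(* Let $r\in\mathbb{N}$. There is a constant $c_3>0$ depending only on $r$ such that for every $b\in(0,\pi]$, every $n\in\mathbb{N}$, every trigonometric polynomial $T_n\in\mathcal{T}_n$ satisfying $tT_n^{(r+1)}(t)\ge 0$ for $|t|\le b$, and every algebraic polynomial $P_r$ of degree $\le r$, $$n\|F_r+P_r-T_n\|_{[-b,b]}\ge c_3 b^r,$$ where $F_r(x):=\frac{1}{r!}|x|x^{r-1}$.
   Context: $\mathcal{T}_n$ is the space of real trigonometric polynomials of degree $\le n$. For a function $g$ on $[a,b]$, $\|g\|_{[a,b]}:=\max_{x\in[a,b]}|g(x)|$. *)

From Stdlib Require Import Reals Lra Arith ZArith Factorial.
From Coquelicot Require Import Coquelicot.
Open Scope R_scope.

Definition is_trig_poly (n : nat) (T : R -> R) : Prop :=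
  exists a b : nat -> R, forall x : R,
    T x = a 0%nat + sum_f 1 n (fun k => a k * cos (INR k * x) + b k * sin (INR k * x)).

Definition is_alg_poly (r : nat) (P : R -> R) : Prop :=
  exists p : nat -> R, forall x : R, P x = sum_f_R0 (fun k => p k * x ^ k) r.

(* F_r(x) = |x| x^(r-1) / r!  (x^(r-1) as an integer power, relevant only for r = 0). *)
Definition F (r : nat) (x : R) : R :=
  / INR (fact r) * (Rabs x * powerRZ x (Z.of_nat r - 1)).

From Stdlib Require Import Reals Lra Lia ZArith Factorial Classical IndefiniteDescription.
From Coquelicot Require Import Coquelicot.
Open Scope R_scope.

(* Let U := T^(r) - P^(r).  The sign hypothesis makes U nondecreasing on [0, b] and
   nonincreasing on [-b, 0], while F_r^(r) is the sign function.  Suppose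
   |F_r + P - T| <= eps on [-b, b] and put eta := eps / b^r.  Integrating F_r + P - T
   against the r-th derivative of a bump of width ~ b moves all r derivatives onto it, so
   weighted averages of U are within O(eta) of 1 on windows in [0, b] and of -1 on windows
   in [-b, 0]; by monotonicity U <= 1 + O(eta) on [0, b/2] and U <= -1 + O(eta) on
   [-b/2, 0].  If eta is small, |U| <= -3 U(0) on [-b/2, b/2], and a local Bernstein
   inequality (Bernstein's inequality after the substitution x = 2 asin (s sin th)) keeps
   U <= 0 on [0, b / (216 n)].  Testing against a bump centred at 0, where the F_r term
   vanishes by parity, then gives n eta >= c.  For r = 0, F_0 is the sign function and the
   jump at 0 cannot be approximated by the continuous T - P. *)

Lemma is_derive_Rplus (f g : R -> R) (x a b : R) :
  is_derive f x a -> is_derive g x b -> is_derive (fun t => f t + g t) x (a + b).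
Proof. intros Ha Hb. exact (is_derive_plus f g x a b Ha Hb). Qed.

Lemma is_derive_Rminus (f g : R -> R) (x a b : R) :
  is_derive f x a -> is_derive g x b -> is_derive (fun t => f t - g t) x (a - b).
Proof. intros Ha Hb. exact (is_derive_minus f g x a b Ha Hb). Qed.

Lemma is_derive_Rmult (f g : R -> R) (x a b : R) :
  is_derive f x a -> is_derive g x b ->
  is_derive (fun t => f t * g t) x (a * g x + f x * b).
Proof. intros Ha Hb. exact (is_derive_mult f g x a b Ha Hb Rmult_comm). Qed.

Lemma is_derive_Rcomp (f g : R -> R) (x a b : R) :
  is_derive f (g x) a -> is_derive g x b -> is_derive (fun t => f (g t)) x (b * a).
Proof. intros Ha Hb. exact (is_derive_comp f g x a b Ha Hb). Qed.

Lemma is_derive_eq (f g : R -> R) (x a b : R) :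
  is_derive f x a -> (forall t, f t = g t) -> a = b -> is_derive g x b.
Proof. intros H E <-. exact (is_derive_ext f g x a E H). Qed.

Lemma continuity_pt_is_derive (f : R -> R) (x l : R) :
  is_derive f x l -> continuity_pt f x.
Proof. intro H. apply derivable_continuous_pt. exists l. now apply is_derive_Reals. Qed.

Lemma is_derive_Rid (x : R) : is_derive (fun t : R => t) x 1.
Proof. exact (is_derive_id x). Qed.

Lemma is_derive_Rconst (c x : R) : is_derive (fun _ : R => c) x 0.
Proof. exact (is_derive_const c x). Qed.

Lemma continuity_is_derive (f df : R -> R) :
  (forall x, is_derive f x (df x)) -> continuity f.
Proof. intros H x. eapply continuity_pt_is_derive, H. Qed.

Lemma Rolle_is_derive (f df : R -> R) (a b : R) :
  a < b -> (forall x, is_derive f x (df x)) -> f a = f b ->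
  exists c, a < c < b /\ df c = 0.
Proof.
  intros Hab Hd Hf.
  assert (pr : forall x, a < x < b -> derivable_pt f x)
    by (intros x _; exists (df x); apply is_derive_Reals, Hd).
  destruct (Rolle f a b pr) as [c [Hc Hc0]]; auto.
  - intros x _. eapply continuity_pt_is_derive, Hd.
  - exists c. split; auto. rewrite <- Hc0. symmetry.
    apply derive_pt_eq_0, is_derive_Reals, Hd.
Qed.

Lemma MVT_is_derive (f df : R -> R) (a b : R) :
  (forall x, is_derive f x (df x)) ->
  exists c, Rmin a b <= c <= Rmax a b /\ f b - f a = df c * (b - a).
Proof.
  intros Hd. apply MVT_gen.
  - intros; apply Hd.
  - intros x _. eapply continuity_pt_is_derive, Hd.
Qed.

Lemma IVT_open (g : R -> R) (a b : R) :
  continuity g -> a < b -> g a * g b < 0 -> exists z, a < z < b /\ g z = 0.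
Proof.
  intros Hc Hab Hs.
  destruct (Rlt_or_le (g a) 0) as [Ha | Ha].
  - assert (Hb : 0 < g b) by nra.
    destruct (IVT g a b Hc Hab Ha Hb) as [z [Hz Hz0]].
    exists z. split; auto.
    split; apply Rnot_le_lt; intro; assert (z = a \/ z = b) as [-> | ->] by lra; lra.
  - assert (Hc' : continuity (fun x => - g x)) by (apply continuity_opp; auto).
    assert (Hb : g b < 0) by nra.
    assert (Ha' : 0 < g a) by nra.
    destruct (IVT (fun x => - g x) a b Hc' Hab ltac:(lra) ltac:(lra)) as [z [Hz Hz0]].
    exists z. split; [|lra].
    split; apply Rnot_le_lt; intro; assert (z = a \/ z = b) as [-> | ->] by lra; lra.
Qed.

Lemma is_derive_neg_local (g : R -> R) (x l a b : R) :
  is_derive g x l -> l < 0 -> a < x < b ->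
  (exists y, a < y < x /\ g x < g y) /\ (exists y, x < y < b /\ g y < g x).
Proof.
  intros Hd Hl Hab. apply is_derive_Reals in Hd.
  destruct (Hd (- l / 2) ltac:(lra)) as [del Hdel].
  pose proof (cond_pos del) as Hdel0.
  assert (Hstep : forall h, h <> 0 -> Rabs h < del -> (g (x + h) - g x) * h < 0).
  { intros h Hh0 Hh. specialize (Hdel h Hh0 Hh). apply Rabs_def2 in Hdel.
    replace ((g (x + h) - g x) * h) with ((g (x + h) - g x) / h * (h * h)) by (field; auto).
    assert (0 < h * h) by nra. nra. }
  set (h := Rmin (del / 2) (Rmin ((x - a) / 2) ((b - x) / 2))).
  assert (Hh : 0 < h /\ h <= del / 2 /\ h <= (x - a) / 2 /\ h <= (b - x) / 2).
  { unfold h. pose proof (Rmin_l (del / 2) (Rmin ((x - a) / 2) ((b - x) / 2))).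
    pose proof (Rmin_r (del / 2) (Rmin ((x - a) / 2) ((b - x) / 2))).
    pose proof (Rmin_l ((x - a) / 2) ((b - x) / 2)).
    pose proof (Rmin_r ((x - a) / 2) ((b - x) / 2)).
    repeat split; try lra. repeat apply Rmin_glb_lt; lra. }
  split.
  - exists (x + - h). pose proof (Hstep (- h)) as Hs.
    rewrite Rabs_Ropp, Rabs_right in Hs by lra. specialize (Hs ltac:(lra) ltac:(lra)).
    split; [lra | nra].
  - exists (x + h). pose proof (Hstep h) as Hs.
    rewrite Rabs_right in Hs by lra. specialize (Hs ltac:(lra) ltac:(lra)).
    split; [lra | nra].
Qed.

Lemma continuity_ext (f g : R -> R) : (forall x, f x = g x) -> continuity f -> continuity g.
Proof. intros E H x. apply continuity_pt_locally_ext with f 1; auto; lra. Qed.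

Lemma nondecreasing_of_derive_nonneg (f df : R -> R) (a b : R) :
  (forall x, is_derive f x (df x)) -> (forall c, a < c < b -> 0 <= df c) ->
  forall x y, a <= x -> x <= y -> y <= b -> f x <= f y.
Proof.
  intros Hd Hpos x y Hax Hxy Hyb.
  destruct (Req_dec x y) as [-> | Hne]; [lra |].
  destruct (MVT_cor2 f df x y ltac:(lra)) as [c [E Hc]].
  - intros c _. apply is_derive_Reals, Hd.
  - specialize (Hpos c ltac:(lra)). nra.
Qed.

Lemma Rdiv_between (a b x w : R) : 0 < w -> a * w <= x <= b * w -> a <= x / w <= b.
Proof.
  intros Hw H. split; apply Rmult_le_reg_r with w; auto;
    replace (x / w * w) with x by (field; lra); lra.
Qed.

(** * Algebraic and trigonometric polynomials *)

Inductive poly_fun : nat -> (R -> R) -> Prop :=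
| poly_const d c : poly_fun d (fun _ => c)
| poly_add d f g : poly_fun d f -> poly_fun d g -> poly_fun d (fun t => f t + g t)
| poly_scal d a f : poly_fun d f -> poly_fun d (fun t => a * f t)
| poly_mulX d f : poly_fun d f -> poly_fun (S d) (fun t => t * f t)
| poly_lift d f : poly_fun d f -> poly_fun (S d) f
| poly_ext d f g : poly_fun d f -> (forall t, f t = g t) -> poly_fun d g.

Lemma poly_fun_le d d' f : poly_fun d f -> (d <= d')%nat -> poly_fun d' f.
Proof. intros H Hle. induction Hle; auto using poly_lift. Qed.

Lemma poly_fun_1mX2 d p :
  poly_fun d p -> poly_fun (S (S d)) (fun t => (1 - t ^ 2) * p t).
Proof.
  intros H. apply poly_ext with (fun t => p t + (-1) * (t * (t * p t))).
  - apply poly_add; [apply poly_fun_le with d; auto | apply poly_scal, poly_mulX, poly_mulX, H].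
  - intros; ring.
Qed.

Lemma poly_fun_pow k : poly_fun k (fun t => t ^ k).
Proof.
  induction k as [|k IH].
  - apply poly_ext with (fun _ => 1); [apply poly_const | reflexivity].
  - apply poly_ext with (fun t => t * t ^ k); [apply poly_mulX, IH | reflexivity].
Qed.

Lemma poly_fun_monomial k d a : (k <= d)%nat -> poly_fun d (fun y => a * y ^ k).
Proof. intros Hk. apply poly_scal, poly_fun_le with k; [apply poly_fun_pow | exact Hk]. Qed.

Lemma is_alg_poly_poly_fun r P : is_alg_poly r P -> poly_fun r P.
Proof.
  intros [p Hp]. apply poly_ext with (fun x => sum_f_R0 (fun k => p k * x ^ k) r).
  - clear Hp. induction r as [|r IH]; simpl.
    + apply poly_scal, poly_fun_pow.
    + apply poly_add; [apply poly_lift, IH | apply poly_scal, poly_fun_pow].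
  - intros; now rewrite Hp.
Qed.

Lemma poly_fun_0_const f : poly_fun 0 f -> exists c, forall t, f t = c.
Proof.
  intro H. remember 0%nat as d eqn:E. induction H; try discriminate.
  - exists c. intros; reflexivity.
  - destruct (IHpoly_fun1 E) as [c1 H1], (IHpoly_fun2 E) as [c2 H2].
    exists (c1 + c2). intros; now rewrite H1, H2.
  - destruct (IHpoly_fun E) as [c1 H1]. exists (a * c1). intros; now rewrite H1.
  - destruct (IHpoly_fun E) as [c1 H1]. exists c1. intros; now rewrite <- H0.
Qed.

Lemma poly_fun_derive d f : poly_fun d f ->
  exists f', poly_fun (pred d) f' /\ (d = 0%nat -> forall t, f' t = 0) /\
             forall t, is_derive f t (f' t).
Proof.
  induction 1 as [d c | d f g _ [f1 [A1 [B1 C1]]] _ [g1 [A2 [B2 C2]]]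
                 | d a f _ [f1 [A1 [B1 C1]]] | d f Hf [f1 [A1 [B1 C1]]]
                 | d f _ [f1 [A1 [B1 C1]]] | d f g _ [f1 [A1 [B1 C1]]] E].
  - exists (fun _ => 0). split; [|split]; auto using poly_const.
    intros t; apply is_derive_Rconst.
  - exists (fun t => f1 t + g1 t). split; [|split].
    + now apply poly_add.
    + intros E t. rewrite B1, B2; auto; ring.
    + intros; now apply is_derive_Rplus.
  - exists (fun t => a * f1 t). split; [|split].
    + now apply poly_scal.
    + intros E t. rewrite B1; auto; ring.
    + intros; now apply is_derive_scal.
  - exists (fun t => f t + t * f1 t). split; [|split].
    + destruct d; simpl.
      * apply poly_ext with f; [exact Hf |]. intros t. rewrite B1; auto; ring.
      * apply poly_add; [exact Hf | apply poly_mulX, A1].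
    + intros E; discriminate.
    + intros t. eapply is_derive_eq;
        [apply is_derive_Rmult; [apply is_derive_Rid | apply C1] | reflexivity | cbv beta; ring].
  - exists f1. split; [|split]; auto.
    + simpl. apply poly_fun_le with (pred d); auto; lia.
    + intros E; discriminate.
  - exists f1. split; [|split]; auto.
    intros t. eapply is_derive_eq; [apply C1 | exact E | reflexivity].
Qed.

Lemma poly_fun_eq0_of_zeros k : forall p z, poly_fun k p ->
  (forall i, (i < k)%nat -> z i < z (S i)) ->
  (forall i, (i <= k)%nat -> p (z i) = 0) -> forall t, p t = 0.
Proof.
  induction k as [|k IH]; intros p z Hp Hz H0 t.
  - destruct (poly_fun_0_const p Hp) as [c Hc].
    rewrite Hc, <- (Hc (z 0%nat)). apply H0; lia.
  - destruct (poly_fun_derive _ _ Hp) as [p' [Hp' [_ Hd]]].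
    assert (Hw : forall i, exists w, (i < S k)%nat -> z i < w < z (S i) /\ p' w = 0).
    { intros i. destruct (Nat.lt_ge_cases i (S k)) as [Hi | Hi].
      - destruct (Rolle_is_derive p p' (z i) (z (S i))) as [w Hw]; auto.
        + rewrite !H0; auto; lia.
        + now exists w.
      - exists 0. intros; lia. }
    destruct (functional_choice _ Hw) as [w Hwf].
    assert (Hp'0 : forall u, p' u = 0).
    { apply IH with w; auto.
      - intros i Hi. destruct (Hwf i) as [[_ A] _]; [lia|].
        destruct (Hwf (S i)) as [[B _] _]; [lia|]. lra.
      - intros i Hi. apply (Hwf i); lia. }
    destruct (MVT_is_derive p p' (z 0%nat) t Hd) as [c [_ Hc]].
    rewrite Hp'0, H0 in Hc by lia. lra.
Qed.

Lemma poly_fun_1pX2 d p :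
  poly_fun d p -> poly_fun (S (S d)) (fun t => (1 + t ^ 2) * p t).
Proof.
  intros H. apply poly_ext with (fun t => p t + t * (t * p t)).
  - apply poly_add; [apply poly_fun_le with d; auto | apply poly_mulX, poly_mulX, H].
  - intros; ring.
Qed.

Lemma poly_fun_2X d p : poly_fun d p -> poly_fun (S (S d)) (fun t => (2 * t) * p t).
Proof.
  intros H. apply poly_ext with (fun t => 2 * (t * p t)).
  - apply poly_scal, poly_lift, poly_mulX, H.
  - intros; ring.
Qed.

Lemma poly_fun_Derive d f : poly_fun d f ->
  poly_fun (pred d) (Derive f) /\ forall x, is_derive f x (Derive f x).
Proof.
  intros H. destruct (poly_fun_derive d f H) as [f' [Hf' [_ Hd]]].
  assert (E : forall x, Derive f x = f' x) by (intros; now apply is_derive_unique).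
  split; [now apply poly_ext with f' |]. intros x. rewrite E. apply Hd.
Qed.

Lemma poly_fun_Derive_n d f : poly_fun d f -> forall j,
  poly_fun (d - j) (Derive_n f j) /\
  forall x, is_derive (Derive_n f j) x (Derive_n f (S j) x).
Proof.
  intros H j. induction j as [|j [IHp _]].
  - rewrite Nat.sub_0_r. split; [exact H |]. apply (poly_fun_Derive d f H).
  - assert (Hp : poly_fun (d - S j) (Derive_n f (S j))).
    { replace (d - S j)%nat with (pred (d - j)) by lia. apply (poly_fun_Derive _ _ IHp). }
    split; [exact Hp | apply (poly_fun_Derive _ _ Hp)].
Qed.

Lemma poly_fun_Derive_n_deg d f : poly_fun d f -> forall x, Derive_n f (S d) x = 0.
Proof.
  intros H x. destruct (poly_fun_Derive_n d f H d) as [Hd _].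
  rewrite Nat.sub_diag in Hd. destruct (poly_fun_0_const _ Hd) as [c Hc].
  simpl. rewrite (Derive_ext _ (fun _ => c)) by exact Hc. apply Derive_const.
Qed.

Inductive trig_fun : nat -> (R -> R) -> Prop :=
| trig_const d c : trig_fun d (fun _ => c)
| trig_add d f g : trig_fun d f -> trig_fun d g -> trig_fun d (fun t => f t + g t)
| trig_scal d a f : trig_fun d f -> trig_fun d (fun t => a * f t)
| trig_mul_cos d f : trig_fun d f -> trig_fun (S d) (fun t => cos t * f t)
| trig_mul_sin d f : trig_fun d f -> trig_fun (S d) (fun t => sin t * f t)
| trig_lift d f : trig_fun d f -> trig_fun (S d) f
| trig_ext d f g : trig_fun d f -> (forall t, f t = g t) -> trig_fun d g.

Lemma trig_fun_le d d' f : trig_fun d f -> (d <= d')%nat -> trig_fun d' f.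
Proof. intros H Hle. induction Hle; auto using trig_lift. Qed.

Lemma trig_fun_sub d f g : trig_fun d f -> trig_fun d g -> trig_fun d (fun t => f t - g t).
Proof.
  intros Hf Hg. apply trig_ext with (fun t => f t + (-1) * g t).
  - apply trig_add; [exact Hf | apply trig_scal, Hg].
  - intros; ring.
Qed.

Lemma trig_fun_derive d f :
  trig_fun d f -> exists f', trig_fun d f' /\ forall t, is_derive f t (f' t).
Proof.
  induction 1 as [d c | d f g _ [f1 [A1 C1]] _ [g1 [A2 C2]] | d a f _ [f1 [A1 C1]]
                 | d f Hf [f1 [A1 C1]] | d f Hf [f1 [A1 C1]] | d f _ [f1 [A1 C1]]
                 | d f g _ [f1 [A1 C1]] E].
  - exists (fun _ => 0). split; [apply trig_const | intros; apply is_derive_Rconst].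
  - exists (fun t => f1 t + g1 t).
    split; [apply trig_add | intros; apply is_derive_Rplus]; auto.
  - exists (fun t => a * f1 t).
    split; [apply trig_scal | intros; apply is_derive_scal]; auto.
  - exists (fun t => (-1) * (sin t * f t) + cos t * f1 t). split.
    + apply trig_add; [apply trig_scal, trig_mul_sin | apply trig_mul_cos]; auto.
    + intros t. eapply is_derive_eq;
        [apply is_derive_Rmult; [apply is_derive_cos | apply C1] | reflexivity | ring].
  - exists (fun t => cos t * f t + sin t * f1 t). split.
    + apply trig_add; [apply trig_mul_cos | apply trig_mul_sin]; auto.
    + intros t. eapply is_derive_eq;
        [apply is_derive_Rmult; [apply is_derive_sin | apply C1] | reflexivity | ring].
  - exists f1. split; [apply trig_lift | ]; auto.
  - exists f1. split; auto.
    intros t. eapply is_derive_eq; [apply C1 | exact E | reflexivity].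
Qed.

Lemma trig_fun_continuity d f : trig_fun d f -> continuity f.
Proof.
  intros H x. destruct (trig_fun_derive d f H) as [f' [_ Hd]].
  eapply continuity_pt_is_derive, Hd.
Qed.

Lemma trig_fun_shift d f a : trig_fun d f -> trig_fun d (fun x => f (x + a)).
Proof.
  induction 1 as [d c | d f g _ IHf _ IHg | d b f _ IH | d f _ IH | d f _ IH | d f _ IH
                 | d f g _ IH E].
  - apply trig_const.
  - now apply trig_add.
  - now apply trig_scal.
  - apply trig_ext with
      (fun x => cos a * (cos x * f (x + a)) + (- sin a) * (sin x * f (x + a))).
    + apply trig_add; apply trig_scal; [apply trig_mul_cos | apply trig_mul_sin]; auto.
    + intros; rewrite cos_plus; ring.
  - apply trig_ext with
      (fun x => cos a * (sin x * f (x + a)) + sin a * (cos x * f (x + a))).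
    + apply trig_add; apply trig_scal; [apply trig_mul_sin | apply trig_mul_cos]; auto.
    + intros; rewrite sin_plus; ring.
  - now apply trig_lift.
  - apply trig_ext with (fun x => f (x + a)); auto.
Qed.

Lemma trig_fun_cos_sin k :
  trig_fun k (fun x => cos (INR k * x)) /\ trig_fun k (fun x => sin (INR k * x)).
Proof.
  induction k as [|k [Hc Hs]].
  - split; [apply trig_ext with (fun _ => 1) | apply trig_ext with (fun _ => 0)];
      try apply trig_const; intros; simpl; now rewrite Rmult_0_l, ?cos_0, ?sin_0.
  - assert (E : forall t, INR (S k) * t = t + INR k * t) by (intros; rewrite S_INR; ring).
    split.
    + apply trig_ext with (fun x => cos x * cos (INR k * x) + (-1) * (sin x * sin (INR k * x))).
      * apply trig_add; [apply trig_mul_cos | apply trig_scal, trig_mul_sin]; auto.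
      * intros t. rewrite E, cos_plus; ring.
    + apply trig_ext with (fun x => sin x * cos (INR k * x) + cos x * sin (INR k * x)).
      * apply trig_add; [apply trig_mul_sin | apply trig_mul_cos]; auto.
      * intros t. rewrite E, sin_plus; ring.
Qed.

Lemma trig_fun_sin_affine k c : trig_fun k (fun x => sin (INR k * x + c)).
Proof.
  destruct (trig_fun_cos_sin k) as [Hc Hs].
  apply trig_ext with (fun x => cos c * sin (INR k * x) + sin c * cos (INR k * x)).
  - apply trig_add; apply trig_scal; auto.
  - intros; rewrite sin_plus; ring.
Qed.

(* [sum_f 1 0] is the single term [k = 1], so [is_trig_poly 0] allows degree 1. *)
Lemma is_trig_poly_trig_fun n T : (1 <= n)%nat -> is_trig_poly n T -> trig_fun n T.
Proof.
  intros Hn [a [b HT]].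
  apply trig_ext with
    (fun x => a 0%nat + sum_f 1 n (fun k => a k * cos (INR k * x) + b k * sin (INR k * x))).
  2: intros; now rewrite HT.
  apply trig_add; [apply trig_const |]. unfold sum_f.
  assert (Hsum : forall m, (m + 1 <= n)%nat -> trig_fun n (fun x => sum_f_R0
            (fun i => a (i + 1)%nat * cos (INR (i + 1) * x)
                      + b (i + 1)%nat * sin (INR (i + 1) * x)) m)).
  { induction m as [|m IH]; intros Hm; simpl.
    - destruct (trig_fun_cos_sin 1) as [Hc Hs].
      apply trig_add; apply trig_scal; apply trig_fun_le with 1%nat; auto.
    - destruct (trig_fun_cos_sin (S m + 1)) as [Hc Hs].
      apply trig_add; [apply IH; lia |].
      apply trig_add; apply trig_scal; apply trig_fun_le with (S m + 1)%nat; auto. }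
  apply Hsum. lia.
Qed.

Lemma one_plus_tan_half_sqr th : -PI < th < PI ->
  1 + tan (th / 2) ^ 2 = / cos (th / 2) ^ 2.
Proof.
  intros H. assert (Hc : 0 < cos (th / 2)) by (apply cos_gt_0; lra).
  pose proof (sin2_cos2 (th / 2)) as E. unfold Rsqr in E.
  unfold tan.
  replace (1 + (sin (th / 2) / cos (th / 2)) ^ 2) with
    ((sin (th / 2) * sin (th / 2) + cos (th / 2) * cos (th / 2)) / (cos (th / 2) * cos (th / 2)))
    by (field; lra).
  rewrite E. field. lra.
Qed.

Lemma cos_tan_half th : -PI < th < PI ->
  cos th * (1 + tan (th / 2) ^ 2) = 1 - tan (th / 2) ^ 2.
Proof.
  intros H. assert (Hc : 0 < cos (th / 2)) by (apply cos_gt_0; lra).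
  rewrite one_plus_tan_half_sqr by exact H.
  replace th with (2 * (th / 2)) at 1 by field. rewrite cos_2a. unfold tan. field. lra.
Qed.

Lemma sin_tan_half th : -PI < th < PI ->
  sin th * (1 + tan (th / 2) ^ 2) = 2 * tan (th / 2).
Proof.
  intros H. assert (Hc : 0 < cos (th / 2)) by (apply cos_gt_0; lra).
  rewrite one_plus_tan_half_sqr by exact H.
  replace th with (2 * (th / 2)) at 1 by field. rewrite sin_2a. unfold tan. field. lra.
Qed.

Lemma trig_fun_tan_half_poly d f : trig_fun d f -> exists p, poly_fun (2 * d) p /\
  forall th, -PI < th < PI -> f th * (1 + tan (th / 2) ^ 2) ^ d = p (tan (th / 2)).
Proof.
  induction 1 as [d c | d f g _ [p1 [A1 B1]] _ [p2 [A2 B2]] | d a f _ [p1 [A1 B1]]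
                 | d f _ [p1 [A1 B1]] | d f _ [p1 [A1 B1]] | d f _ [p1 [A1 B1]]
                 | d f g _ [p1 [A1 B1]] E];
    try replace (2 * S d)%nat with (S (S (2 * d))) by lia.
  - exists (fun t => c * (1 + t ^ 2) ^ d). split; [|reflexivity].
    apply poly_scal. clear. induction d as [|d IH].
    { apply poly_ext with (fun _ => 1); [apply poly_const | reflexivity]. }
    replace (2 * S d)%nat with (S (S (2 * d))) by lia.
    apply poly_ext with (fun t => (1 + t ^ 2) * (1 + t ^ 2) ^ d);
      [apply poly_fun_1pX2, IH | reflexivity].
  - exists (fun t => p1 t + p2 t). split; [now apply poly_add |].
    intros. rewrite <- B1, <- B2 by auto. ring.
  - exists (fun t => a * p1 t). split; [now apply poly_scal |].
    intros. rewrite <- B1 by auto. ring.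
  - exists (fun t => (1 - t ^ 2) * p1 t). split; [now apply poly_fun_1mX2 |].
    intros. rewrite <- B1, <- cos_tan_half by auto. simpl; ring.
  - exists (fun t => (2 * t) * p1 t). split; [now apply poly_fun_2X |].
    intros. rewrite <- B1, <- sin_tan_half by auto. simpl; ring.
  - exists (fun t => (1 + t ^ 2) * p1 t). split; [now apply poly_fun_1pX2 |].
    intros. rewrite <- B1 by auto. simpl; ring.
  - exists p1. split; auto. intros. now rewrite <- E, B1.
Qed.

Lemma trig_fun_eq0_of_zeros d f z : trig_fun d f ->
  (forall i, (i < 2 * d)%nat -> z i < z (S i)) ->
  (forall i, (i <= 2 * d)%nat -> -PI < z i < PI /\ f (z i) = 0) ->
  forall th, -PI < th < PI -> f th = 0.
Proof.
  intros Hf Hz H0 th Hth.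
  destruct (trig_fun_tan_half_poly d f Hf) as [p [Hp Hpf]].
  assert (Hp0 : forall t, p t = 0).
  { apply poly_fun_eq0_of_zeros with (2 * d)%nat (fun i => tan (z i / 2)); auto.
    - intros i Hi. destruct (H0 i ltac:(lia)), (H0 (S i) ltac:(lia)).
      specialize (Hz i Hi). apply tan_increasing; lra.
    - intros i Hi. destruct (H0 i Hi) as [A B]. rewrite <- Hpf by auto. rewrite B; ring. }
  specialize (Hpf th Hth). rewrite Hp0 in Hpf.
  assert (0 < (1 + tan (th / 2) ^ 2) ^ d) by (apply pow_lt; nra).
  apply Rmult_integral in Hpf as [Hf0 | Hf0]; [exact Hf0 | lra].
Qed.

Lemma trig_fun_mul_poly_sin k p m G : poly_fun k p -> trig_fun m G ->
  trig_fun (k + m) (fun t => p (sin t) * G t).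
Proof.
  intros Hp HG. induction Hp as [k c | k p q _ IHp _ IHq | k a p _ IH | k p _ IH | k p _ IH
                                | k p q _ IH E].
  - apply trig_scal, trig_fun_le with m; [exact HG | lia].
  - apply trig_ext with (fun t => p (sin t) * G t + q (sin t) * G t); [now apply trig_add |].
    intros; ring.
  - apply trig_ext with (fun t => a * (p (sin t) * G t)); [now apply trig_scal |].
    intros; ring.
  - apply trig_ext with (fun t => sin t * (p (sin t) * G t)); [now apply trig_mul_sin |].
    intros; ring.
  - now apply trig_lift.
  - apply trig_ext with (fun t => p (sin t) * G t); [exact IH |]. intros; now rewrite E.
Qed.

Lemma trig_fun_Derive_n d f : trig_fun d f -> forall j,
  trig_fun d (Derive_n f j) /\ forall x, is_derive (Derive_n f j) x (Derive_n f (S j) x).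
Proof.
  intros H j.
  assert (HD : forall g, trig_fun d g ->
                trig_fun d (Derive g) /\ forall x, is_derive g x (Derive g x)).
  { intros g Hg. destruct (trig_fun_derive d g Hg) as [g' [Hg' Hd]].
    assert (E : forall x, Derive g x = g' x) by (intros; now apply is_derive_unique).
    split; [now apply trig_ext with g' |]. intros x. rewrite E. apply Hd. }
  induction j as [|j [IHt _]].
  - split; [exact H | apply (HD f H)].
  - split; [apply (HD _ IHt) | apply (HD _ (proj1 (HD _ IHt)))].
Qed.

(** * Bernstein's inequality *)

Lemma trig_fun_eq0_of_zeros_window d f z a : trig_fun d f ->
  (forall i, (i < 2 * d)%nat -> z i < z (S i)) ->
  (forall i, (i <= 2 * d)%nat -> a < z i < a + 2 * PI /\ f (z i) = 0) ->
  forall x, a < x < a + 2 * PI -> f x = 0.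
Proof.
  intros Hf Hz H0 x Hx.
  replace x with ((x - (a + PI)) + (a + PI)) by ring.
  apply (trig_fun_eq0_of_zeros d (fun y => f (y + (a + PI))) (fun i => z i - (a + PI)));
    [now apply trig_fun_shift | | | lra].
  - intros i Hi. specialize (Hz i Hi). lra.
  - intros i Hi. destruct (H0 i Hi) as [Hzi Hfz]. split; [lra |].
    now replace (z i - (a + PI) + (a + PI)) with (z i) by ring.
Qed.

(* Besides a zero in each [(e j, e (S j))], the first interval holds two more: [g] is
   negative at [e 0], positive at [e 1], and crosses [0] downwards at [x0]. *)
Lemma zeros_of_alternating (g : R -> R) (e : nat -> R) (m : nat) (x0 l : R) :
  (1 <= m)%nat -> continuity g -> (forall j, e j < e (S j)) ->
  (forall j, g (e j) * g (e (S j)) < 0) ->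
  g (e 0%nat) < 0 -> e 0%nat < x0 < e 1%nat -> g x0 = 0 -> is_derive g x0 l -> l < 0 ->
  exists Z : nat -> R, (forall i, Z i < Z (S i)) /\
    forall i, (i <= m)%nat -> e 0%nat < Z i < e m /\ g (Z i) = 0.
Proof.
  intros Hm Hc He Halt He0 Hx0 Hg0 Hd Hl.
  assert (Hzj : forall j, exists z, e j < z < e (S j) /\ g z = 0)
    by (intros j; apply IVT_open; auto).
  destruct (functional_choice _ Hzj) as [zj Hzj'].
  destruct (is_derive_neg_local g x0 l (e 0%nat) (e 1%nat) Hd Hl Hx0)
    as [[y1 [Hy1 Hgy1]] [y2 [Hy2 Hgy2]]].
  rewrite Hg0 in Hgy1, Hgy2.
  assert (He1 : 0 < g (e 1%nat)) by (specialize (Halt 0%nat); nra).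
  destruct (IVT_open g (e 0%nat) y1 Hc ltac:(lra) ltac:(nra)) as [za [Hza Hgza]].
  destruct (IVT_open g y2 (e 1%nat) Hc ltac:(lra) ltac:(nra)) as [zb [Hzb Hgzb]].
  set (Z := fun i => match i with 0%nat => za | 1%nat => x0 | 2%nat => zb
                             | S (S k) => zj k end).
  assert (HZ : forall i, Z i < Z (S i)).
  { intros [|[|[|k]]]; cbn; try lra.
    - destruct (Hzj' 1%nat); lra.
    - destruct (Hzj' (S k)), (Hzj' (S (S k))); lra. }
  assert (HZe : forall i, (1 <= i)%nat -> Z i < e i).
  { intros [|[|[|k]]] Hi; cbn; try lia; try lra.
    - pose proof (He 1%nat). lra.
    - destruct (Hzj' (S k)). pose proof (He (S (S k))). lra. }
  exists Z. split; [exact HZ |]. intros i Hi. split; [split |].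
  - pose proof (growing_prop Z i 0 ltac:(intros k; left; apply HZ) ltac:(lia)). cbn in *. lra.
  - assert (Hem : forall k, (k <= m)%nat -> e k <= e m)
      by (intros k Hk; apply Rge_le, growing_prop; [intros q; left; apply He | lia]).
    destruct i as [|i].
    + specialize (HZ 0%nat). specialize (HZe 1%nat ltac:(lia)). specialize (Hem 1%nat Hm). lra.
    + specialize (HZe (S i) ltac:(lia)). specialize (Hem (S i) Hi). lra.
  - destruct i as [|[|[|k]]]; cbn; auto. apply Hzj'.
Qed.

Lemma sin_sub_half_PI_mult j : sin (INR j * PI - PI / 2) = - (-1) ^ j.
Proof.
  induction j as [|j IH].
  - simpl. replace (0 * PI - PI / 2) with (- (PI / 2)) by ring.
    rewrite sin_neg, sin_PI2. ring.
  - rewrite S_INR. replace ((INR j + 1) * PI - PI / 2) with ((INR j * PI - PI / 2) + PI) by ring.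
    rewrite neg_sin, IH. simpl. ring.
Qed.

Lemma sin_affine_extrema (D : nat) (phi x0 : R) : (1 <= D)%nat -> - (PI / 2) < phi < PI / 2 ->
  exists e : nat -> R,
    (forall j, sin (INR D * e j + (phi - INR D * x0)) = - (-1) ^ j) /\
    (forall j, e (S j) = e j + PI / INR D) /\
    e (2 * D)%nat = e 0%nat + 2 * PI /\ e 0%nat < x0 < e 1%nat.
Proof.
  intros HD Hphi. assert (HDD : 1 <= INR D) by (apply (le_INR 1); auto).
  pose proof PI_RGT_0.
  exists (fun j => x0 + (INR j * PI - PI / 2 - phi) / INR D). split; [| split; [| split]].
  - intros j. rewrite <- sin_sub_half_PI_mult. f_equal. field. lra.
  - intros j. rewrite S_INR. field. lra.
  - rewrite mult_INR. simpl. field. lra.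
  - simpl. split.
    + assert ((0 * PI - PI / 2 - phi) / INR D < 0) by (apply Rdiv_neg_pos; lra). lra.
    + assert (0 < (1 * PI - PI / 2 - phi) / INR D) by (apply Rdiv_lt_0_compat; lra). lra.
Qed.

(* If [f' x0 > D], the function [sin (D x + c) - f] with [c] chosen to make it vanish at
   [x0] has [2 D + 2] zeros in a period, too many for a trigonometric polynomial of
   degree [D]. *)
Lemma bernstein_unit (D : nat) (f df : R -> R) : (1 <= D)%nat -> trig_fun D f ->
  (forall x, is_derive f x (df x)) -> (forall x, Rabs (f x) < 1) ->
  forall x0, df x0 <= INR D.
Proof.
  intros HD Hf Hdf Hb x0. apply Rnot_lt_le; intro Hgt.
  assert (Hfb : forall x, -1 < f x < 1)
    by (intros x; specialize (Hb x); apply Rabs_def2 in Hb; lra).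
  assert (HDD : 1 <= INR D) by (apply (le_INR 1); auto).
  set (phi := asin (f x0)).
  pose proof (asin_bound_lt (f x0) (Hfb x0)) as Hphi. fold phi in Hphi.
  destruct (sin_affine_extrema D phi x0 HD Hphi) as [e [Hsin [Hstep [H2D Hx0]]]].
  set (Del := fun x => sin (INR D * x + (phi - INR D * x0)) - f x).
  assert (HDel : forall j, Del (e j) = - (-1) ^ j - f (e j))
    by (intros j; unfold Del; now rewrite Hsin).
  assert (TDel : trig_fun D Del) by (apply trig_fun_sub; [apply trig_fun_sin_affine | exact Hf]).
  assert (Hpi : 0 < PI / INR D < 2 * PI).
  { pose proof PI_RGT_0. split; [apply Rdiv_lt_0_compat; lra |].
    apply Rmult_lt_reg_r with (INR D); [lra |]. unfold Rdiv. rewrite Rmult_assoc, Rinv_l; nra. }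
  destruct (zeros_of_alternating Del e (2 * D) x0 (INR D * cos phi - df x0))
    as [Z [HZinc HZ]]; auto; try lia.
  - now apply trig_fun_continuity with D.
  - intros j. rewrite Hstep. lra.
  - intros j. rewrite !HDel. simpl.
    assert (Hs : (-1) ^ j = 1 \/ (-1) ^ j = -1).
    { pose proof (pow_1_abs j) as Ha. unfold Rabs in Ha. destruct Rcase_abs; lra. }
    pose proof (Hfb (e j)). pose proof (Hfb (e (S j))).
    destruct Hs as [-> | ->]; nra.
  - rewrite HDel. simpl. pose proof (Hfb (e 0%nat)). lra.
  - unfold Del. replace (INR D * x0 + (phi - INR D * x0)) with phi by ring.
    unfold phi. rewrite sin_asin by (pose proof (Hfb x0); lra). ring.
  - unfold Del. eapply is_derive_eq; [apply is_derive_Rminus; [| apply Hdf] | reflexivity |].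
    + auto_derive; [exact I | reflexivity].
    + replace (INR D * x0 + (phi - INR D * x0)) with phi by ring. ring.
  - pose proof (COS_bound phi). nra.
  - rewrite H2D in HZ.
    pose proof (trig_fun_eq0_of_zeros_window D Del Z (e 0%nat) TDel
                  (fun i _ => HZinc i) HZ (e 1%nat)) as Hzero.
    rewrite HDel, Hstep in Hzero. simpl in Hzero.
    pose proof (Hfb (e 0%nat + PI / INR D)). specialize (Hzero ltac:(lra)). lra.
Qed.

Theorem bernstein_inequality (D : nat) (f df : R -> R) (M : R) :
  (1 <= D)%nat -> trig_fun D f -> (forall x, is_derive f x (df x)) ->
  (forall x, Rabs (f x) <= M) -> forall x, Rabs (df x) <= INR D * M.
Proof.
  intros HD Hf Hdf Hb x.
  assert (HM : 0 <= M) by (pose proof (Hb 0); pose proof (Rabs_pos (f 0)); lra).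
  assert (HDD : 1 <= INR D) by (apply (le_INR 1); auto).
  apply Rle_plus_epsilon. intros eps Heps.
  set (M' := M + eps / INR D).
  assert (HM' : M < M')
    by (unfold M'; assert (0 < eps / INR D) by (apply Rdiv_lt_0_compat; lra); lra).
  assert (Hsgn : forall s, Rabs s = 1 -> s * df x / M' <= INR D).
  { intros s Hs. apply (bernstein_unit D (fun y => s * f y / M') (fun y => s * df y / M')); auto.
    - apply trig_ext with (fun y => (s / M') * f y); [apply trig_scal, Hf | intros; field; lra].
    - intros y. eapply is_derive_eq; [apply is_derive_scal with (k := s / M'), Hdf | |];
        intros; cbv beta; field; lra.
    - intros y. unfold Rdiv. rewrite !Rabs_mult, Rabs_inv, Hs, (Rabs_right M') by lra.
      specialize (Hb y). apply Rmult_lt_reg_r with M'; [lra |].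
      rewrite Rmult_assoc, Rinv_l by lra. lra. }
  assert (Hp := Hsgn 1 Rabs_R1).
  assert (Hn := Hsgn (-1) ltac:(rewrite Rabs_left; lra)).
  apply Rmult_le_compat_r with (r := M') in Hp, Hn; try lra.
  unfold Rdiv in Hp, Hn. rewrite Rmult_assoc, Rinv_l in Hp, Hn by lra.
  replace (INR D * M + eps) with (INR D * M') by (unfold M'; field; lra).
  apply Rabs_le. lra.
Qed.

(** * A local Bernstein inequality *)

Lemma sin_ge_cubic z : 0 <= z <= 2 -> z - z ^ 3 / 6 <= sin z.
Proof.
  intros Hz. pose proof PI2_3_2.
  destruct (SIN z ltac:(lra) ltac:(lra)) as [Hlb _].
  eapply Rle_trans; [| exact Hlb].
  assert (0 <= z ^ 5 * (42 - z ^ 2)) by (apply Rmult_le_pos; [apply pow_le; lra | nra]).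
  unfold sin_lb, sin_approx, sin_term. simpl. lra.
Qed.

Lemma asin_le_twice y : 0 <= y <= 3 / 5 -> 0 <= asin y <= 2 * y.
Proof.
  intros Hy. set (z := asin y).
  assert (Hs : sin z = y) by (apply sin_asin; lra).
  destruct (asin_bound y) as [A B]. fold z in A, B.
  pose proof PI_4. pose proof PI_RGT_0.
  assert (Hz0 : 0 <= z).
  { apply Rnot_lt_le. intro Hq.
    assert (0 < sin (- z)) by (apply sin_gt_0; lra). rewrite sin_neg in *. lra. }
  split; [exact Hz0 |].
  pose proof (sin_ge_cubic z ltac:(lra)) as Hg. rewrite Hs in Hg.
  destruct (Rle_or_lt (z ^ 2) 3) as [Hq | Hq].
  - assert (z * (1 / 2 - z ^ 2 / 6) >= 0) by (apply Rle_ge, Rmult_le_pos; lra). nra.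
  - exfalso. assert (0 <= (2 - z) * (z ^ 2 + 2 * z - 2)) by (apply Rmult_le_pos; nra). nra.
Qed.

(* For [s = sin (b0 / 2)], [x = asin_subst s th] sweeps [[-b0, b0]] as [th] runs over R,
   with [dx / dth] of order [b0] near [0].  Since [cos x] and [sin x / cos (x / 2)] are
   polynomials in [s sin th], a trigonometric polynomial in [x] becomes
   [G th + cos (x / 2) H th] with [G], [H] trigonometric in [th], and the global Bernstein
   inequality for [G] and [H] gives a local one for [f] near [0]. *)
Definition asin_subst (s th : R) : R := 2 * asin (s * sin th).

Section AsinSubst.

Variable s : R.
Hypothesis Hs : 0 < s < 1.

Let s_sin_bound th : -1 <= s * sin th <= 1.
Proof. pose proof (SIN_bound th). split; nra. Qed.

Lemma sin_half_asin_subst th : sin (asin_subst s th / 2) = s * sin th.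
Proof. unfold asin_subst. replace (2 * asin (s * sin th) / 2) with (asin (s * sin th)) by field.
  now apply sin_asin. Qed.

Lemma cos_half_asin_subst th :
  0 < cos (asin_subst s th / 2) /\ cos (asin_subst s th / 2) ^ 2 = 1 - (s * sin th) ^ 2.
Proof.
  unfold asin_subst. replace (2 * asin (s * sin th) / 2) with (asin (s * sin th)) by field.
  pose proof (SIN_bound th).
  assert (sin th * sin th <= 1) by nra.
  assert (0 < 1 - (s * sin th)²) by (unfold Rsqr; nra).
  rewrite cos_asin by apply s_sin_bound. split; [now apply sqrt_lt_R0 |].
  simpl. rewrite Rmult_1_r, sqrt_sqrt by lra. unfold Rsqr; ring.
Qed.

Lemma cos_asin_subst th : cos (asin_subst s th) = 1 - 2 * (s * sin th) ^ 2.
Proof.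
  replace (asin_subst s th) with (2 * (asin_subst s th / 2)) by field.
  rewrite cos_2a_sin, sin_half_asin_subst. ring.
Qed.

Lemma sin_asin_subst th :
  sin (asin_subst s th) = 2 * (s * sin th) * cos (asin_subst s th / 2).
Proof.
  replace (asin_subst s th) with (2 * (asin_subst s th / 2)) at 1 by field.
  now rewrite sin_2a, sin_half_asin_subst.
Qed.

Lemma asin_subst_opp th : asin_subst s (- th) = - asin_subst s th.
Proof.
  unfold asin_subst. rewrite sin_neg.
  replace (s * - sin th) with (- (s * sin th)) by ring. rewrite asin_opp. ring.
Qed.

Definition asin_subst_split (d : nat) (f : R -> R) : Prop :=
  exists G H, trig_fun d G /\ trig_fun d H /\
    (forall th, G (- th) = G th) /\ (forall th, H (- th) = - H th) /\
    forall th, f (asin_subst s th) = G th + cos (asin_subst s th / 2) * H th.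

Lemma asin_subst_split_mul_cos m f :
  asin_subst_split m f -> asin_subst_split (3 + m) (fun t => cos t * f t).
Proof.
  intros [G [H [HG [HH [HGe [HHo Hf]]]]]].
  set (p := fun y => 1 - 2 * (s * y) ^ 2).
  assert (Hp : poly_fun 3 p).
  { apply poly_ext with (fun y => 1 + (- 2 * s ^ 2) * y ^ 2); [| intros; unfold p; ring].
    apply poly_add; [apply poly_const | apply poly_fun_monomial; lia]. }
  exists (fun t => p (sin t) * G t), (fun t => p (sin t) * H t).
  repeat split; try (apply trig_fun_mul_poly_sin; auto); intros th; unfold p.
  - rewrite HGe, sin_neg. ring.
  - rewrite HHo, sin_neg. ring.
  - rewrite Hf, cos_asin_subst. ring.
Qed.

Lemma asin_subst_split_mul_sin m f :
  asin_subst_split m f -> asin_subst_split (3 + m) (fun t => sin t * f t).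
Proof.
  intros [G [H [HG [HH [HGe [HHo Hf]]]]]].
  set (p := fun y => 2 * s * y * (1 - (s * y) ^ 2)). set (q := fun y => 2 * s * y).
  assert (Hp : poly_fun 3 p).
  { apply poly_ext with (fun y => 2 * s * y ^ 1 + (- 2 * s ^ 3) * y ^ 3);
      [apply poly_add; apply poly_fun_monomial; lia | intros; unfold p; ring]. }
  assert (Hq : poly_fun 3 q).
  { apply poly_ext with (fun y => 2 * s * y ^ 1); [apply poly_fun_monomial; lia |].
    intros; unfold q; ring. }
  exists (fun t => p (sin t) * H t), (fun t => q (sin t) * G t).
  repeat split; try (apply trig_fun_mul_poly_sin; auto); intros th; unfold p, q.
  - rewrite HHo, sin_neg. ring.
  - rewrite HGe, sin_neg. ring.
  - rewrite Hf, sin_asin_subst.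
    destruct (cos_half_asin_subst th) as [_ Ec].
    set (c := cos (asin_subst s th / 2)) in *.
    transitivity (2 * (s * sin th) * c * G th + 2 * (s * sin th) * c ^ 2 * H th); [ring |].
    rewrite Ec. ring.
Qed.

Lemma trig_fun_asin_subst_split d f : trig_fun d f -> asin_subst_split (3 * d) f.
Proof.
  induction 1 as [d c | d f g _ [G1 [H1 [A1 [B1 [C1 [D1 E1]]]]]] _ [G2 [H2 [A2 [B2 [C2 [D2 E2]]]]]]
                 | d a f _ [G1 [H1 [A1 [B1 [C1 [D1 E1]]]]]] | d f _ IH | d f _ IH
                 | d f _ [G1 [H1 [A1 [B1 [C1 [D1 E1]]]]]]
                 | d f g _ [G1 [H1 [A1 [B1 [C1 [D1 E1]]]]]] E];
    try (replace (3 * S d)%nat with (3 + 3 * d)%nat by lia).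
  - exists (fun _ => c), (fun _ => 0). repeat split; try apply trig_const; intros; ring.
  - exists (fun t => G1 t + G2 t), (fun t => H1 t + H2 t).
    repeat split; try (apply trig_add; auto); intros th.
    + now rewrite C1, C2.
    + rewrite D1, D2; ring.
    + rewrite E1, E2; ring.
  - exists (fun t => a * G1 t), (fun t => a * H1 t).
    repeat split; try (apply trig_scal; auto); intros th.
    + now rewrite C1.
    + rewrite D1; ring.
    + rewrite E1; ring.
  - now apply asin_subst_split_mul_cos.
  - now apply asin_subst_split_mul_sin.
  - exists G1, H1. repeat split; auto; apply trig_fun_le with (3 * d)%nat; auto; lia.
  - exists G1, H1. repeat split; auto. intros th; now rewrite <- E.
Qed.

Lemma cos_half_asin_subst_ge th : s ^ 2 <= 1 / 2 -> 1 / 2 <= cos (asin_subst s th / 2).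
Proof.
  intros Hs2. destruct (cos_half_asin_subst th) as [Hc Ec].
  pose proof (SIN_bound th).
  assert ((s * sin th) ^ 2 <= s ^ 2).
  { rewrite Rpow_mult_distr. assert (sin th ^ 2 <= 1) by (simpl; nra).
    assert (0 <= s ^ 2) by apply pow2_ge_0. nra. }
  nra.
Qed.

Lemma asin_subst_parts_bound f G H M : s ^ 2 <= 1 / 2 ->
  (forall th, Rabs (f (asin_subst s th)) <= M) ->
  (forall th, G (- th) = G th) -> (forall th, H (- th) = - H th) ->
  (forall th, f (asin_subst s th) = G th + cos (asin_subst s th / 2) * H th) ->
  forall th, Rabs (G th) <= M /\ Rabs (H th) <= 2 * M.
Proof.
  intros Hs2 HM HG HH Hf th.
  assert (Hfm : f (asin_subst s (- th)) = G th - cos (asin_subst s th / 2) * H th).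
  { rewrite Hf, HG, HH, asin_subst_opp.
    replace (- asin_subst s th / 2) with (- (asin_subst s th / 2)) by field.
    rewrite cos_neg. ring. }
  pose proof (HM th) as Hp. pose proof (HM (- th)) as Hn. rewrite Hf in Hp. rewrite Hfm in Hn.
  pose proof (cos_half_asin_subst_ge th Hs2) as Hc.
  set (c := cos (asin_subst s th / 2)) in *.
  apply Rabs_le_between in Hp, Hn.
  split; apply Rabs_le; split; nra.
Qed.
End AsinSubst.

Lemma sin_half_bounds b0 : 0 < b0 <= PI / 2 ->
  b0 / 4 <= sin (b0 / 2) /\ sin (b0 / 2) ^ 2 <= 1 / 2.
Proof.
  intros Hb0. pose proof PI_4. pose proof PI_RGT_0.
  split.
  - pose proof (sin_ge_cubic (b0 / 2) ltac:(lra)). assert ((b0 / 2) ^ 2 <= 1) by nra. nra.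
  - assert (Hle : sin (b0 / 2) <= sin (PI / 4)) by (apply sin_incr_1; lra).
    assert (0 < sin (b0 / 2)) by (apply sin_gt_0; lra).
    rewrite sin_PI4 in Hle.
    assert (Hsq : sqrt 2 * sqrt 2 = 2) by (apply sqrt_sqrt; lra).
    assert (0 < sqrt 2) by (apply sqrt_lt_R0; lra).
    assert (sin (b0 / 2) * sqrt 2 <= 1).
    { apply Rmult_le_reg_r with (/ sqrt 2); [apply Rinv_0_lt_compat; lra |].
      rewrite Rmult_assoc, Rinv_r, Rmult_1_l, Rmult_1_r by lra. lra. }
    nra.
Qed.

Lemma asin_subst_bound b0 th : 0 < b0 <= PI ->
  - b0 <= asin_subst (sin (b0 / 2)) th <= b0.
Proof.
  intros Hb0. unfold asin_subst. pose proof PI_RGT_0.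
  assert (Hs : 0 <= sin (b0 / 2)) by (apply sin_ge_0; lra).
  pose proof (SIN_bound th).
  assert (Hy : - sin (b0 / 2) <= sin (b0 / 2) * sin th <= sin (b0 / 2)) by (split; nra).
  assert (Hy1 : -1 <= sin (b0 / 2) * sin th <= 1) by (pose proof (SIN_bound (b0 / 2)); lra).
  destruct (asin_bound (sin (b0 / 2) * sin th)).
  pose proof (sin_asin _ Hy1) as E.
  split.
  - assert (- (b0 / 2) <= asin (sin (b0 / 2) * sin th)); [| lra].
    apply sin_incr_0; rewrite ?sin_neg; lra.
  - assert (asin (sin (b0 / 2) * sin th) <= b0 / 2); [| lra].
    apply sin_incr_0; lra.
Qed.

Lemma asin_subst_preimage b0 t : 0 < b0 <= PI / 2 -> 0 <= t <= b0 / 2 ->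
  exists th, 0 <= th <= 4 * t / b0 /\ asin_subst (sin (b0 / 2)) th = t.
Proof.
  intros Hb0 Ht. pose proof PI_4. pose proof PI_RGT_0.
  set (s := sin (b0 / 2)).
  destruct (sin_half_bounds b0 Hb0) as [Hsb _]. fold s in Hsb.
  assert (Hs0 : 0 < s) by lra.
  set (y := sin (t / 2) / s).
  assert (Hst : 0 <= sin (t / 2) <= t / 2).
  { split; [apply sin_ge_0; lra |].
    destruct (Req_dec t 0) as [-> | E]; [replace (0 / 2) with 0 by field; rewrite sin_0; lra |].
    left; apply sin_lt_x; lra. }
  assert (Hy35 : sin (t / 2) <= 3 / 5 * s).
  { assert (sin (t / 2) <= sin (b0 / 4)) by (apply sin_incr_1; lra).
    assert (Es : s = 2 * sin (b0 / 4) * cos (b0 / 4))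
      by (unfold s; rewrite <- sin_2a; f_equal; field).
    assert (5 / 6 <= cos (b0 / 4)).
    { replace (b0 / 4) with (2 * (b0 / 8)) by field. rewrite cos_2a_sin.
      pose proof (sin_lt_x (b0 / 8) ltac:(lra)).
      assert (0 <= sin (b0 / 8)) by (apply sin_ge_0; lra). nra. }
    assert (0 <= sin (b0 / 4)) by (apply sin_ge_0; lra). nra. }
  assert (Hy : 0 <= y <= 3 / 5 /\ y <= 2 * t / b0).
  { unfold y. repeat split.
    - apply Rdiv_le_0_compat; lra.
    - apply Rmult_le_reg_r with s; auto. unfold Rdiv. rewrite Rmult_assoc, Rinv_l; lra.
    - apply Rmult_le_reg_r with s; auto. unfold Rdiv. rewrite Rmult_assoc, Rinv_l by lra.
      apply Rle_trans with (2 * t * / b0 * (b0 / 4));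
        [replace (2 * t * / b0 * (b0 / 4)) with (t / 2) by (field; lra); lra |].
      apply Rmult_le_compat_l; [| lra]. apply Rmult_le_pos; [lra |].
      left; apply Rinv_0_lt_compat; lra. }
  exists (asin y). split.
  - pose proof (asin_le_twice y ltac:(lra)). split; [lra |].
    replace (4 * t / b0) with (2 * (2 * t / b0)) by (field; lra). lra.
  - unfold asin_subst. fold s. rewrite sin_asin by lra. unfold y.
    replace (s * (sin (t / 2) / s)) with (sin (t / 2)) by (field; lra).
    rewrite asin_sin by lra. field.
Qed.

Theorem local_bernstein n f M b0 : (1 <= n)%nat -> trig_fun n f -> 0 < b0 <= PI / 2 ->
  (forall x, - b0 <= x <= b0 -> Rabs (f x) <= M) ->
  forall t, 0 <= t <= b0 / 2 -> Rabs (f t - f 0) <= 36 * INR n * M * t / b0.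
Proof.
  intros Hn Hf Hb0 HM t Ht.
  assert (HM0 : 0 <= M) by (pose proof (HM 0 ltac:(lra)); pose proof (Rabs_pos (f 0)); lra).
  assert (HnR : 1 <= INR n) by (apply (le_INR 1); auto).
  set (s := sin (b0 / 2)).
  destruct (sin_half_bounds b0 Hb0) as [Hsb Hs2]. fold s in Hsb, Hs2.
  assert (Hs : 0 < s < 1) by nra.
  destruct (trig_fun_asin_subst_split s Hs n f Hf) as [G [H [HG [HH [HGe [HHo Hfx]]]]]].
  assert (Hbd := asin_subst_parts_bound s Hs f G H M Hs2
                   (fun th => HM _ (asin_subst_bound b0 th ltac:(lra))) HGe HHo Hfx).
  destruct (trig_fun_derive _ G HG) as [G' [_ HdG]].
  destruct (trig_fun_derive _ H HH) as [H' [_ HdH]].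
  assert (Hn3 : (1 <= 3 * n)%nat) by lia.
  pose proof (bernstein_inequality _ G G' M Hn3 HG HdG (fun th => proj1 (Hbd th))) as BG.
  pose proof (bernstein_inequality _ H H' (2 * M) Hn3 HH HdH (fun th => proj2 (Hbd th))) as BH.
  rewrite mult_INR in BG, BH. simpl (INR 3) in BG, BH.
  destruct (asin_subst_preimage b0 t Hb0 Ht) as [th [Hth Hxt]]. fold s in Hxt.
  assert (HH0 : H 0 = 0) by (pose proof (HHo 0) as E; rewrite Ropp_0 in E; lra).
  assert (Hx0 : asin_subst s 0 = 0) by (unfold asin_subst; rewrite sin_0, Rmult_0_r, asin_0; ring).
  assert (Hdiff : f t - f 0 = (G th - G 0) + cos (asin_subst s th / 2) * (H th - H 0)).
  { assert (Ef0 : f 0 = G 0) by (rewrite <- Hx0 at 1; rewrite Hfx, HH0; ring).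
    rewrite Ef0, <- Hxt, Hfx, HH0. ring. }
  destruct (MVT_is_derive G G' 0 th HdG) as [c1 [_ E1]].
  destruct (MVT_is_derive H H' 0 th HdH) as [c2 [_ E2]].
  pose proof (BG c1). pose proof (BH c2).
  pose proof (cos_half_asin_subst_ge s Hs th Hs2). pose proof (COS_bound (asin_subst s th / 2)).
  rewrite Hdiff, E1, E2, Rminus_0_r.
  eapply Rle_trans; [apply Rabs_triang |].
  rewrite !Rabs_mult, (Rabs_right (cos _)), (Rabs_right th) by lra.
  assert (Rabs (G' c1) * th <= 3 * INR n * M * th) by (apply Rmult_le_compat_r; lra).
  assert (Rabs (H' c2) * th <= 3 * INR n * (2 * M) * th) by (apply Rmult_le_compat_r; lra).
  assert (cos (asin_subst s th / 2) * (Rabs (H' c2) * th) <= Rabs (H' c2) * th).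
  { rewrite <- (Rmult_1_l (Rabs (H' c2) * th)) at 2.
    apply Rmult_le_compat_r; [apply Rmult_le_pos; [apply Rabs_pos | lra] | lra]. }
  assert (9 * INR n * M * th <= 9 * INR n * M * (4 * t / b0))
    by (apply Rmult_le_compat_l; [nra | lra]).
  replace (36 * INR n * M * t / b0) with (9 * INR n * M * (4 * t / b0)) by (field; lra).
  nra.
Qed.

Lemma ex_RInt_continuity (f : R -> R) (a b : R) : continuity f -> ex_RInt f a b.
Proof.
  intros H. apply (ex_RInt_continuous (V := R_CompleteNormedModule)).
  intros z _. apply continuity_pt_filterlim, H.
Qed.

Lemma RInt_ext_R (f g : R -> R) (a b : R) :
  (forall x, Rmin a b < x < Rmax a b -> f x = g x) -> RInt f a b = RInt g a b.
Proof. apply RInt_ext. Qed.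

Lemma RInt_Rplus (f g : R -> R) (a b : R) : continuity f -> continuity g ->
  RInt (fun x => f x + g x) a b = RInt f a b + RInt g a b.
Proof.
  intros Hf Hg.
  exact (RInt_plus f g a b (ex_RInt_continuity f a b Hf) (ex_RInt_continuity g a b Hg)).
Qed.

Lemma RInt_Rminus (f g : R -> R) (a b : R) : continuity f -> continuity g ->
  RInt (fun x => f x - g x) a b = RInt f a b - RInt g a b.
Proof.
  intros Hf Hg.
  exact (RInt_minus f g a b (ex_RInt_continuity f a b Hf) (ex_RInt_continuity g a b Hg)).
Qed.

Lemma RInt_Rscal (c : R) (f : R -> R) (a b : R) : continuity f ->
  RInt (fun x => c * f x) a b = c * RInt f a b.
Proof. intros Hf. exact (RInt_scal f a b c (ex_RInt_continuity f a b Hf)). Qed.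

Lemma RInt_Rconst (c a b : R) : RInt (fun _ => c) a b = c * (b - a).
Proof. rewrite (RInt_const (V := R_CompleteNormedModule)). apply Rmult_comm. Qed.

Lemma RInt_Chasles_cont (f : R -> R) (a b c : R) : continuity f ->
  RInt f a b + RInt f b c = RInt f a c.
Proof.
  intros Hf.
  exact (RInt_Chasles f a b c (ex_RInt_continuity f a b Hf) (ex_RInt_continuity f b c Hf)).
Qed.

Lemma RInt_le_cont (f g : R -> R) (a b : R) : a <= b -> continuity f -> continuity g ->
  (forall x, a < x < b -> f x <= g x) -> RInt f a b <= RInt g a b.
Proof. intros Hab Hf Hg H. apply RInt_le; auto; now apply ex_RInt_continuity. Qed.

Lemma RInt_le_const_mult (f : R -> R) (a b m : R) : a <= b -> continuity f ->
  (forall x, a < x < b -> f x <= m) -> RInt f a b <= m * (b - a).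
Proof.
  intros Hab Hf H. rewrite <- RInt_Rconst.
  apply RInt_le_cont; auto. apply continuity_const. now intros x y.
Qed.

Lemma RInt_ge_const_mult (f : R -> R) (a b m : R) : a <= b -> continuity f ->
  (forall x, a < x < b -> m <= f x) -> m * (b - a) <= RInt f a b.
Proof.
  intros Hab Hf H. rewrite <- RInt_Rconst.
  apply RInt_le_cont; auto. apply continuity_const. now intros x y.
Qed.

Lemma RInt_abs_le (f : R -> R) (a b M : R) : a <= b -> continuity f ->
  (forall x, a < x < b -> Rabs (f x) <= M) -> Rabs (RInt f a b) <= M * (b - a).
Proof.
  intros Hab Hf H. apply Rabs_le.
  assert (- M * (b - a) <= RInt f a b).
  { apply RInt_ge_const_mult; auto. intros x Hx. specialize (H x Hx).
    apply Rabs_le_between in H. lra. }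
  assert (RInt f a b <= M * (b - a)).
  { apply RInt_le_const_mult; auto. intros x Hx. specialize (H x Hx).
    apply Rabs_le_between in H. lra. }
  lra.
Qed.

Lemma RInt_ge_of_inner_bound (f : R -> R) (a b a' b' m : R) :
  a <= a' -> a' <= b' -> b' <= b -> continuity f ->
  (forall x, a < x < b -> 0 <= f x) -> (forall x, a' < x < b' -> m <= f x) ->
  m * (b' - a') <= RInt f a b.
Proof.
  intros H1 H2 H3 Hf Hp Hm.
  rewrite <- (RInt_Chasles_cont f a a' b Hf), <- (RInt_Chasles_cont f a' b' b Hf).
  assert (0 * (a' - a) <= RInt f a a') by (apply RInt_ge_const_mult; auto; intros; apply Hp; lra).
  assert (0 * (b - b') <= RInt f b' b) by (apply RInt_ge_const_mult; auto; intros; apply Hp; lra).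
  assert (m * (b' - a') <= RInt f a' b') by (apply RInt_ge_const_mult; auto).
  lra.
Qed.

Lemma RInt_mult_le (U w : R -> R) (a b m : R) : a <= b -> continuity U -> continuity w ->
  (forall x, a < x < b -> 0 <= w x) -> (forall x, a < x < b -> U x <= m) ->
  RInt (fun x => U x * w x) a b <= m * RInt w a b.
Proof.
  intros Hab HU Hw Hpos Hm. rewrite <- RInt_Rscal by exact Hw.
  apply RInt_le_cont; auto.
  - now apply continuity_mult.
  - now apply continuity_scal.
  - intros x Hx. apply Rmult_le_compat_r; auto.
Qed.

Lemma RInt_mult_ge (U w : R -> R) (a b m : R) : a <= b -> continuity U -> continuity w ->
  (forall x, a < x < b -> 0 <= w x) -> (forall x, a < x < b -> m <= U x) ->
  m * RInt w a b <= RInt (fun x => U x * w x) a b.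
Proof.
  intros Hab HU Hw Hpos Hm. rewrite <- RInt_Rscal by exact Hw.
  apply RInt_le_cont; auto.
  - now apply continuity_scal.
  - now apply continuity_mult.
  - intros x Hx. apply Rmult_le_compat_r; auto.
Qed.

Lemma RInt_odd_sym (f : R -> R) (b : R) : continuity f ->
  (forall x, f (- x) = - f x) -> RInt f (- b) b = 0.
Proof.
  intros Hf Ho.
  assert (H1 := RInt_correct f (- b) b (ex_RInt_continuity f _ _ Hf)).
  set (I := RInt f (- b) b) in *.
  assert (H2 : is_RInt f (- b) (- (- b)) I) by now rewrite Ropp_involutive.
  apply (is_RInt_comp_opp f b (- b) I) in H2.
  apply is_RInt_ext with (g := f) in H2; [| intros x _; unfold opp; simpl; rewrite Ho; ring].
  apply is_RInt_swap, (is_RInt_unique (V := R_CompleteNormedModule)) in H2.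
  fold I in H2. unfold opp in H2; simpl in H2. lra.
Qed.

Lemma RInt_even_sym (f : R -> R) (b : R) : continuity f ->
  (forall x, f (- x) = f x) -> RInt f (- b) 0 = RInt f 0 b.
Proof.
  intros Hf He.
  assert (H1 := RInt_correct f (- b) 0 (ex_RInt_continuity f _ _ Hf)).
  set (I := RInt f (- b) 0) in *.
  assert (H2 : is_RInt f (- b) (- 0) I) by now rewrite Ropp_0.
  apply (is_RInt_comp_opp f b 0 I) in H2.
  apply is_RInt_ext with (g := fun x => - f x) in H2;
    [| intros x _; unfold opp; simpl; now rewrite He].
  apply (is_RInt_unique (V := R_CompleteNormedModule)) in H2.
  rewrite (RInt_ext_R _ (fun x => (-1) * f x)) in H2 by (intros; ring).
  rewrite RInt_Rscal in H2 by exact Hf.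
  pose proof (RInt_Chasles_cont f 0 b 0 Hf) as E.
  rewrite RInt_point in E. unfold zero in E; simpl in E. lra.
Qed.

Lemma RInt_parts (f df g dg : R -> R) (a b : R) :
  (forall x, is_derive f x (df x)) -> (forall x, is_derive g x (dg x)) ->
  continuity df -> continuity dg -> g a = 0 -> g b = 0 ->
  RInt (fun x => f x * dg x) a b = - RInt (fun x => df x * g x) a b.
Proof.
  intros Hf Hg Cdf Cdg Ga Gb.
  assert (Cf := continuity_is_derive f df Hf). assert (Cg := continuity_is_derive g dg Hg).
  assert (H : is_RInt (fun x => df x * g x + f x * dg x) a b (minus (f b * g b) (f a * g a))).
  { apply (is_RInt_derive (fun x => f x * g x)).
    - intros; now apply is_derive_Rmult.
    - intros x _. apply continuity_pt_filterlim.
      apply continuity_plus; apply continuity_mult; auto. }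
  apply (is_RInt_unique (V := R_CompleteNormedModule)) in H.
  rewrite Ga, Gb in H. unfold minus, plus, opp in H; simpl in H.
  rewrite RInt_Rplus in H by (apply continuity_mult; auto). lra.
Qed.

Lemma RInt_parts_iter m : forall (f g : nat -> R -> R) a b,
  (forall j x, (j < m)%nat -> is_derive (f j) x (f (S j) x)) -> continuity (f m) ->
  (forall j x, (j < m)%nat -> is_derive (g j) x (g (S j) x)) -> continuity (g m) ->
  (forall j, (j < m)%nat -> g j a = 0 /\ g j b = 0) ->
  RInt (fun x => f 0%nat x * g m x) a b = (-1) ^ m * RInt (fun x => f m x * g 0%nat x) a b.
Proof.
  induction m as [|m IH]; intros f g a b Hf Cf Hg Cg Hz.
  - simpl. now rewrite Rmult_1_l.
  - assert (Cf1 : continuity (f 1%nat)).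
    { destruct m; [exact Cf |]. apply continuity_is_derive with (f 2%nat).
      intros x. apply (Hf 1%nat x). lia. }
    assert (Cgm : continuity (g m)).
    { apply continuity_is_derive with (g (S m)). intros x. apply (Hg m x). lia. }
    rewrite (RInt_parts (f 0%nat) (f 1%nat) (g m) (g (S m))).
    + rewrite (IH (fun j => f (S j)) g a b).
      * simpl. ring.
      * intros j x Hj. apply (Hf (S j) x). lia.
      * exact Cf.
      * intros j x Hj. apply (Hg j x). lia.
      * exact Cgm.
      * intros j Hj. apply Hz. lia.
    + intros x. apply (Hf 0%nat x). lia.
    + intros x. apply (Hg m x). lia.
    + exact Cf1.
    + exact Cg.
    + apply Hz; lia.
    + apply Hz; lia.
Qed.

(** * Bumps and the truncated power *)

Section Bump.

Variable r : nat.

Definition bump (y : R) : R := (1 - y ^ 2) ^ r.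

Definition bump_D (j : nat) : R -> R := Derive_n bump j.

Lemma bump_poly_fun : poly_fun (2 * r) bump.
Proof.
  unfold bump. induction r as [|k IH].
  - apply poly_ext with (fun _ => 1); [apply poly_const | reflexivity].
  - replace (2 * S k)%nat with (S (S (2 * k))) by lia.
    apply poly_ext with (fun y => (1 - y ^ 2) * (1 - y ^ 2) ^ k);
      [apply poly_fun_1mX2, IH | reflexivity].
Qed.

Lemma bump_D_derive j x : is_derive (bump_D j) x (bump_D (S j) x).
Proof. apply (poly_fun_Derive_n _ _ bump_poly_fun j). Qed.

Lemma bump_D_continuity j : continuity (bump_D j).
Proof. apply continuity_is_derive with (bump_D (S j)). apply bump_D_derive. Qed.

Lemma bump_D_factor j : (j <= r)%nat ->
  exists m G, poly_fun m G /\ forall y, bump_D j y = (1 - y ^ 2) ^ (r - j) * G y.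
Proof.
  induction j as [|j IH]; intros Hj.
  - exists 0%nat, (fun _ => 1). split; [apply poly_const |].
    intros y. rewrite Nat.sub_0_r. unfold bump_D, bump. simpl. ring.
  - destruct IH as [m [G [HG EG]]]; [lia |].
    destruct (poly_fun_derive m G HG) as [G' [HG' [_ DG']]].
    set (k := (r - S j)%nat). assert (Hk : (r - j)%nat = S k) by (unfold k; lia).
    exists (S (S m)), (fun y => (INR (S k) * (-2)) * (y * G y) + (1 - y ^ 2) * G' y).
    split.
    + apply poly_add; [apply poly_scal, poly_lift, poly_mulX, HG |].
      apply poly_fun_1mX2, poly_fun_le with (pred m); [exact HG' | lia].
    + intros y. unfold bump_D. simpl. fold (bump_D j).
      rewrite (Derive_ext (bump_D j) (fun y => (1 - y ^ 2) ^ (r - j) * G y)) by exact EG.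
      apply is_derive_unique. rewrite Hk.
      eapply is_derive_eq;
        [apply is_derive_Rmult; [apply is_derive_pow | apply DG'] | reflexivity |].
      * eapply is_derive_eq;
          [apply is_derive_Rminus; [apply is_derive_Rconst | apply is_derive_pow, is_derive_Rid]
          | reflexivity | reflexivity].
      * simpl. fold k. ring.
Qed.

Lemma bump_D_ends j : (j < r)%nat -> bump_D j 1 = 0 /\ bump_D j (-1) = 0.
Proof.
  intros Hj. destruct (bump_D_factor j ltac:(lia)) as [m [G [_ EG]]].
  rewrite !EG. replace (r - j)%nat with (S (r - j - 1)) by lia. simpl. split; ring.
Qed.

Lemma bump_D_opp j y : bump_D j (- y) = (-1) ^ j * bump_D j y.
Proof.
  revert y. induction j as [|j IH]; intros y.
  - unfold bump_D. simpl Derive_n. unfold bump.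
    replace ((- y) ^ 2) with (y ^ 2) by ring. simpl. ring.
  - assert (Hneg : is_derive (fun z : R => - z) y (-1)) by (auto_derive; [exact I | ring]).
    assert (A : is_derive (fun z => bump_D j (- z)) y (- bump_D (S j) (- y))).
    { eapply is_derive_eq;
        [apply (is_derive_Rcomp (bump_D j) (fun z => - z)); [apply bump_D_derive | exact Hneg]
        | reflexivity | ring]. }
    assert (B : is_derive (fun z => bump_D j (- z)) y ((-1) ^ j * bump_D (S j) y)).
    { eapply is_derive_eq;
        [apply is_derive_scal, bump_D_derive | intros; now rewrite IH | reflexivity]. }
    apply is_derive_unique in A, B. rewrite A in B. simpl. lra.
Qed.

Lemma bump_D_bounded j : exists C, 0 < C /\ forall y, -1 <= y <= 1 -> Rabs (bump_D j y) <= C.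
Proof.
  destruct (continuity_ab_maj (fun y => Rabs (bump_D j y)) (-1) 1) as [y0 [Hy0 _]]; [lra | |].
  - intros c _. apply (continuity_pt_comp (bump_D j) Rabs);
      [apply bump_D_continuity | apply Rcontinuity_abs].
  - exists (Rmax 1 (Rabs (bump_D j y0))).
    split; [apply Rlt_le_trans with 1; [lra | apply Rmax_l] |].
    intros y Hy. eapply Rle_trans; [apply Hy0, Hy | apply Rmax_r].
Qed.

(* [window c w j] is the [j]-th derivative of [x |-> w ^ r * bump ((x - c) / w)], which is
   supported on [[c - w, c + w]]. *)
Definition window (c w : R) (j : nat) (x : R) : R := w ^ (r - j) * bump_D j ((x - c) / w).

Lemma window_derive c w j x : 0 < w -> (j < r)%nat ->
  is_derive (window c w j) x (window c w (S j) x).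
Proof.
  intros Hw Hj. unfold window.
  assert (Hl : is_derive (fun x => (x - c) / w) x (/ w)) by (auto_derive; [auto | field; lra]).
  eapply is_derive_eq;
    [apply is_derive_scal, (is_derive_Rcomp (bump_D j) (fun x => (x - c) / w));
       [apply bump_D_derive | exact Hl]
    | reflexivity |].
  replace (r - j)%nat with (S (r - S j)) by lia. simpl. field. lra.
Qed.

Lemma window_continuity c w j : continuity (window c w j).
Proof.
  unfold window. apply continuity_scal.
  apply (continuity_comp (fun x => (x - c) / w) (bump_D j)); [| apply bump_D_continuity].
  apply derivable_continuous. reg.
Qed.

Lemma window_ends c w j : 0 < w -> (j < r)%nat ->
  window c w j (c - w) = 0 /\ window c w j (c + w) = 0.
Proof.
  intros Hw Hj. unfold window. destruct (bump_D_ends j Hj) as [A B].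
  replace ((c - w - c) / w) with (-1) by (field; lra).
  replace ((c + w - c) / w) with 1 by (field; lra). rewrite A, B. split; ring.
Qed.

Lemma window_0_bounds c w x : 0 < w -> c - w <= x <= c + w -> 0 <= window c w 0 x <= w ^ r.
Proof.
  intros Hw Hx. unfold window, bump_D, bump. simpl Derive_n. rewrite Nat.sub_0_r.
  set (y := (x - c) / w).
  assert (Hy : -1 <= y <= 1) by (apply Rdiv_between; lra).
  assert (Hq : 0 <= 1 - y ^ 2 <= 1) by (split; nra).
  assert (0 <= w ^ r) by (apply pow_le; lra).
  assert (Hp : (1 - y ^ 2) ^ r <= 1 ^ r) by (apply pow_incr; exact Hq). rewrite pow1 in Hp.
  split; [apply Rmult_le_pos; auto; apply pow_le; lra |].
  rewrite <- (Rmult_1_r (w ^ r)) at 2. apply Rmult_le_compat_l; auto.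
Qed.

Lemma window_0_lower c w x : 0 < w -> c - w / 2 <= x <= c + w / 2 ->
  w ^ r * (3 / 4) ^ r <= window c w 0 x.
Proof.
  intros Hw Hx. unfold window, bump_D, bump. simpl Derive_n. rewrite Nat.sub_0_r.
  set (y := (x - c) / w).
  assert (Hy : -1 / 2 <= y <= 1 / 2) by (apply Rdiv_between; lra).
  apply Rmult_le_compat_l; [apply pow_le; lra |]. apply pow_incr. simpl. nra.
Qed.

Lemma window_r_bound C c w x : 0 < w -> (forall y, -1 <= y <= 1 -> Rabs (bump_D r y) <= C) ->
  c - w <= x <= c + w -> Rabs (window c w r x) <= C.
Proof.
  intros Hw HC Hx. unfold window. rewrite Nat.sub_diag, pow_O, Rmult_1_l.
  apply HC, Rdiv_between; lra.
Qed.

Lemma window_opp w j x : window 0 w j (- x) = (-1) ^ j * window 0 w j x.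
Proof.
  unfold window. replace ((- x - 0) / w) with (- ((x - 0) / w)) by (unfold Rdiv; ring).
  rewrite bump_D_opp. ring.
Qed.

Lemma RInt_window_0_ge c w : 0 < w ->
  w * (w ^ r * (3 / 4) ^ r) <= RInt (window c w 0) (c - w) (c + w).
Proof.
  intros Hw.
  replace (w * (w ^ r * (3 / 4) ^ r)) with ((w ^ r * (3 / 4) ^ r) * ((c + w / 2) - (c - w / 2)))
    by field.
  apply RInt_ge_of_inner_bound; try lra.
  - apply window_continuity.
  - intros x Hx. apply (window_0_bounds c w x Hw). lra.
  - intros x Hx. apply window_0_lower; auto. lra.
Qed.

End Bump.

Definition monomial_D (r j : nat) (x : R) : R := x ^ (r - j) / INR (fact (r - j)).

Lemma monomial_D_derive r j x : (j < r)%nat ->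
  is_derive (monomial_D r j) x (monomial_D r (S j) x).
Proof.
  intros Hj. unfold monomial_D. replace (r - j)%nat with (S (r - S j)) by lia.
  set (k := (r - S j)%nat).
  assert (0 < INR (fact k)) by apply INR_fact_lt_0.
  auto_derive; [lra |].
  change (match k with 0%nat => 1 | S _ => INR k + 1 end) with (INR (S k)).
  rewrite plus_INR, mult_INR, S_INR. pose proof (pos_INR k).
  field. split; [lra | nra].
Qed.

Lemma monomial_D_diag r x : monomial_D r r x = 1.
Proof. unfold monomial_D. rewrite Nat.sub_diag. simpl. field. Qed.

Lemma monomial_D_continuity r j : continuity (monomial_D r j).
Proof.
  apply continuity_ext with (fun x => / INR (fact (r - j)) * x ^ (r - j)).
  - intros; unfold monomial_D, Rdiv; ring.
  - apply continuity_scal, derivable_continuous, derivable_pow.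
Qed.

Lemma F_eq r x : (1 <= r)%nat -> F r x = / INR (fact r) * (Rabs x * x ^ (r - 1)).
Proof.
  intros Hr. unfold F. replace (Z.of_nat r - 1)%Z with (Z.of_nat (r - 1)) by lia.
  now rewrite <- pow_powerRZ.
Qed.

Lemma F_nonneg r x : (1 <= r)%nat -> 0 <= x -> F r x = monomial_D r 0 x.
Proof.
  intros Hr Hx. rewrite F_eq by exact Hr. unfold monomial_D. rewrite Nat.sub_0_r.
  rewrite Rabs_right by lra. replace r with (S (r - 1)) at 3 by lia. simpl. unfold Rdiv. ring.
Qed.

Lemma F_nonpos r x : (1 <= r)%nat -> x <= 0 -> F r x = - monomial_D r 0 x.
Proof.
  intros Hr Hx. rewrite F_eq by exact Hr. unfold monomial_D. rewrite Nat.sub_0_r.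
  rewrite Rabs_left1 by lra. replace r with (S (r - 1)) at 3 by lia. simpl. unfold Rdiv. ring.
Qed.

Lemma F_continuity r : (1 <= r)%nat -> continuity (F r).
Proof.
  intros Hr. apply continuity_ext with (fun x => / INR (fact r) * (Rabs x * x ^ (r - 1))).
  - intros; symmetry; now apply F_eq.
  - apply continuity_scal, continuity_mult;
      [apply Rcontinuity_abs | apply derivable_continuous, derivable_pow].
Qed.

Lemma F_opp r x : (1 <= r)%nat -> F r (- x) = - (-1) ^ r * F r x.
Proof.
  intros Hr. rewrite !F_eq by exact Hr. rewrite Rabs_Ropp.
  replace (- x) with ((-1) * x) by ring. rewrite Rpow_mult_distr.
  assert (E : (-1) ^ r = -1 * (-1) ^ (r - 1)).
  { replace r with (S (r - 1)) at 1 by lia. reflexivity. }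
  rewrite E. ring.
Qed.

(** * The main estimate *)

Section Main.

Variables (r n : nat) (b eps C : R) (T P : R -> R).
Hypothesis Hr : (1 <= r)%nat.
Hypothesis Hn : (1 <= n)%nat.
Hypothesis Hb : 0 < b <= PI.
Hypothesis HT : trig_fun n T.
Hypothesis HP : poly_fun r P.
Hypothesis Hsign : forall t, Rabs t <= b -> 0 <= t * Derive_n T (S r) t.
Hypothesis Heps : forall x, -b <= x <= b -> Rabs (F r x + P x - T x) <= eps.
Hypothesis HC0 : 0 < C.
Hypothesis HC : forall y, -1 <= y <= 1 -> Rabs (bump_D r r y) <= C.

Definition TmP_D (j : nat) (x : R) : R := Derive_n T j x - Derive_n P j x.

Let U := TmP_D r.

Lemma TmP_D_derive j x : is_derive (TmP_D j) x (TmP_D (S j) x).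
Proof.
  apply is_derive_Rminus; [apply (trig_fun_Derive_n n T HT j) | apply (poly_fun_Derive_n r P HP j)].
Qed.

Lemma TmP_D_continuity j : continuity (TmP_D j).
Proof. apply continuity_is_derive with (TmP_D (S j)), TmP_D_derive. Qed.

Lemma U_derive x : is_derive U x (Derive_n T (S r) x).
Proof.
  eapply is_derive_eq; [apply TmP_D_derive | reflexivity |].
  unfold TmP_D. rewrite (poly_fun_Derive_n_deg r P HP). ring.
Qed.

Lemma U_trig_fun : trig_fun n U.
Proof.
  destruct (poly_fun_Derive_n r P HP r) as [Hd _]. rewrite Nat.sub_diag in Hd.
  destruct (poly_fun_0_const _ Hd) as [c Hc].
  apply trig_ext with (fun x => Derive_n T r x - c).
  - apply trig_fun_sub; [apply (trig_fun_Derive_n n T HT r) | apply trig_const].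
  - intros x. unfold U, TmP_D. now rewrite Hc.
Qed.

Lemma U_mono_right x y : 0 <= x -> x <= y -> y <= b -> U x <= U y.
Proof.
  apply (nondecreasing_of_derive_nonneg U (Derive_n T (S r)) 0 b U_derive).
  intros c Hc. pose proof (Hsign c ltac:(rewrite Rabs_right; lra)). nra.
Qed.

Lemma U_mono_left x y : -b <= x -> x <= y -> y <= 0 -> U y <= U x.
Proof.
  intros Hx Hxy Hy.
  enough (- U x <= - U y) by lra.
  apply (nondecreasing_of_derive_nonneg (fun t => - U t) (fun t => - Derive_n T (S r) t) (-b) 0);
    auto.
  - intros t. eapply is_derive_eq;
      [apply (is_derive_scal U t (-1)), U_derive | intros u; cbv beta; ring | ring].
  - intros c Hc. pose proof (Hsign c ltac:(rewrite Rabs_left; lra)). nra.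
Qed.

Lemma RInt_TmP_D_window c w : 0 < w ->
  RInt (fun x => TmP_D 0 x * window r c w r x) (c - w) (c + w)
  = (-1) ^ r * RInt (fun x => U x * window r c w 0 x) (c - w) (c + w).
Proof.
  intros Hw. apply (RInt_parts_iter r TmP_D (window r c w)).
  - intros; apply TmP_D_derive.
  - apply TmP_D_continuity.
  - intros; now apply window_derive.
  - apply window_continuity.
  - intros; now apply window_ends.
Qed.

Lemma RInt_monomial_D_window c w : 0 < w ->
  RInt (fun x => monomial_D r 0 x * window r c w r x) (c - w) (c + w)
  = (-1) ^ r * RInt (window r c w 0) (c - w) (c + w).
Proof.
  intros Hw. rewrite (RInt_parts_iter r (monomial_D r) (window r c w)).
  - f_equal. apply RInt_ext_R. intros; rewrite monomial_D_diag; ring.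
  - intros; now apply monomial_D_derive.
  - apply monomial_D_continuity.
  - intros; now apply window_derive.
  - apply window_continuity.
  - intros; now apply window_ends.
Qed.

Lemma error_continuity : continuity (fun x => F r x + P x - T x).
Proof.
  apply continuity_minus; [apply continuity_plus; [now apply F_continuity |] |].
  - apply continuity_is_derive with (Derive_n P 1). apply (poly_fun_Derive_n r P HP 0).
  - apply trig_fun_continuity with n, HT.
Qed.

Lemma RInt_error_window_le c w : 0 < w -> -b <= c - w -> c + w <= b ->
  Rabs (RInt (fun x => (F r x + P x - T x) * window r c w r x) (c - w) (c + w))
  <= eps * C * (2 * w).
Proof.
  intros Hw H1 H2. replace (2 * w) with ((c + w) - (c - w)) by ring.
  apply RInt_abs_le; [lra | |].
  - apply continuity_mult; [apply error_continuity | apply window_continuity].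
  - intros x Hx. rewrite Rabs_mult.
    apply Rmult_le_compat; try apply Rabs_pos; [apply Heps; lra |].
    apply window_r_bound; auto; lra.
Qed.

Lemma eps_nonneg : 0 <= eps.
Proof. pose proof (Heps 0 ltac:(lra)). pose proof (Rabs_pos (F r 0 + P 0 - T 0)). lra. Qed.

Lemma side_window (sg c w : R) : 0 < w -> -b <= c - w -> c + w <= b ->
  (forall x, c - w < x < c + w -> F r x = sg * monomial_D r 0 x) ->
  Rabs (sg * RInt (window r c w 0) (c - w) (c + w)
        - RInt (fun x => U x * window r c w 0 x) (c - w) (c + w)) <= eps * C * (2 * w).
Proof.
  intros Hw H1 H2 HF.
  assert (Cm : continuity (fun x => monomial_D r 0 x * window r c w r x))
    by (apply continuity_mult; [apply monomial_D_continuity | apply window_continuity]).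
  assert (Ct : continuity (fun x => TmP_D 0 x * window r c w r x))
    by (apply continuity_mult; [apply TmP_D_continuity | apply window_continuity]).
  assert (Csm : continuity (fun x => sg * (monomial_D r 0 x * window r c w r x)))
    by now apply continuity_scal.
  assert (E : @eq R (RInt (fun x => (F r x + P x - T x) * window r c w r x) (c - w) (c + w))
    ((-1) ^ r * (sg * RInt (window r c w 0) (c - w) (c + w)
                 - RInt (fun x => U x * window r c w 0 x) (c - w) (c + w)))).
  { rewrite (RInt_ext_R _ (fun x => sg * (monomial_D r 0 x * window r c w r x)
                                    - TmP_D 0 x * window r c w r x)).
    - rewrite RInt_Rminus, RInt_Rscal, RInt_TmP_D_window, RInt_monomial_D_window by auto.
      ring.
    - intros x Hx. rewrite Rmin_left, Rmax_right in Hx by lra.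
      rewrite HF by lra. unfold TmP_D. simpl. ring. }
  pose proof (RInt_error_window_le c w Hw H1 H2) as Hle.
  now rewrite E, Rabs_mult, pow_1_abs, Rmult_1_l in Hle.
Qed.

Lemma U_le_of_window (sg c w t : R) : 0 < w -> -b <= c - w -> c + w <= b ->
  (forall x, c - w < x < c + w -> F r x = sg * monomial_D r 0 x) ->
  (forall x, c - w < x < c + w -> U t <= U x) ->
  U t <= sg + 2 * eps * C / (w ^ r * (3 / 4) ^ r).
Proof.
  intros Hw H1 H2 HF HU.
  pose proof (side_window sg c w Hw H1 H2 HF) as Hside. apply Rabs_le_between in Hside.
  set (A0 := RInt (window r c w 0) (c - w) (c + w)) in *.
  set (AU := RInt (fun x => U x * window r c w 0 x) (c - w) (c + w)) in *.
  assert (HUc : continuity U) by apply TmP_D_continuity.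
  assert (HAU : U t * A0 <= AU).
  { apply RInt_mult_ge; auto; [lra | apply window_continuity |].
    intros x Hx. apply (window_0_bounds r c w x Hw). lra. }
  assert (HA0 : w * (w ^ r * (3 / 4) ^ r) <= A0) by now apply RInt_window_0_ge.
  assert (Hq : 0 < w ^ r * (3 / 4) ^ r) by (apply Rmult_lt_0_compat; apply pow_lt; lra).
  pose proof eps_nonneg.
  assert (H2eps : 0 <= 2 * eps * C / (w ^ r * (3 / 4) ^ r))
    by (apply Rdiv_le_0_compat; nra).
  destruct (Rle_or_lt (U t) sg) as [Hle | Hgt]; [lra |].
  assert (Hk : (U t - sg) * (w ^ r * (3 / 4) ^ r) <= 2 * eps * C).
  { apply Rmult_le_reg_l with w; [exact Hw |].
    apply Rle_trans with ((U t - sg) * A0); nra. }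
  apply Rmult_le_reg_r with (w ^ r * (3 / 4) ^ r); [exact Hq |].
  unfold Rdiv. rewrite Rmult_plus_distr_r, Rmult_assoc, Rinv_l by lra. lra.
Qed.

Definition window_const : R := 2 * C * (16 / 3) ^ r.

Lemma window_const_pos : 0 < window_const.
Proof. unfold window_const. assert (0 < (16 / 3) ^ r) by (apply pow_lt; lra). nra. Qed.

Lemma window_const_eq :
  2 * eps * C / ((b / 4) ^ r * (3 / 4) ^ r) = window_const * (eps / b ^ r).
Proof.
  unfold window_const. rewrite <- Rpow_mult_distr.
  replace (b / 4 * (3 / 4)) with (b / (16 / 3)) by field.
  unfold Rdiv. rewrite Rpow_mult_distr, pow_inv. field.
  split; apply pow_nonzero; lra.
Qed.

Lemma U_le_right t : 0 <= t <= b / 2 -> U t <= 1 + window_const * (eps / b ^ r).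
Proof.
  intros Ht. rewrite <- window_const_eq.
  apply (U_le_of_window 1 (t + b / 4)); try lra.
  - intros x Hx. rewrite Rmult_1_l. apply F_nonneg; auto; lra.
  - intros x Hx. apply U_mono_right; lra.
Qed.

Lemma U_le_left t : - (b / 2) <= t <= 0 -> U t <= -1 + window_const * (eps / b ^ r).
Proof.
  intros Ht. rewrite <- window_const_eq.
  apply (U_le_of_window (-1) (t - b / 4)); try lra.
  - intros x Hx. rewrite F_nonpos; auto; lra.
  - intros x Hx. apply U_mono_left; lra.
Qed.

Lemma central_window w : 0 < w -> w <= b ->
  Rabs (RInt (fun x => U x * window r 0 w 0 x) (- w) w) <= eps * C * (2 * w).
Proof.
  intros Hw Hwb.
  assert (CF : continuity (fun x => F r x * window r 0 w r x))
    by (apply continuity_mult; [now apply F_continuity | apply window_continuity]).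
  assert (Ct : continuity (fun x => TmP_D 0 x * window r 0 w r x))
    by (apply continuity_mult; [apply TmP_D_continuity | apply window_continuity]).
  assert (Hodd : RInt (fun x => F r x * window r 0 w r x) (- w) w = 0).
  { apply RInt_odd_sym; [exact CF |]. intros x.
    rewrite F_opp, window_opp by exact Hr.
    replace (- (-1) ^ r * F r x * ((-1) ^ r * window r 0 w r x))
      with (- ((-1) ^ r * (-1) ^ r) * (F r x * window r 0 w r x)) by ring.
    rewrite <- Rpow_mult_distr. replace (-1 * -1) with 1 by ring. rewrite pow1. ring. }
  assert (E : @eq R (RInt (fun x => (F r x + P x - T x) * window r 0 w r x) (0 - w) (0 + w))
    (- (-1) ^ r * RInt (fun x => U x * window r 0 w 0 x) (0 - w) (0 + w))).
  { rewrite (RInt_ext_R _ (fun x => F r x * window r 0 w r x - TmP_D 0 x * window r 0 w r x))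
      by (intros; unfold TmP_D; simpl; ring).
    rewrite RInt_Rminus, RInt_TmP_D_window by auto.
    rewrite Rminus_0_l, Rplus_0_l, Hodd. ring. }
  pose proof (RInt_error_window_le 0 w Hw ltac:(lra) ltac:(lra)) as Hle.
  rewrite E, Rabs_mult, Rabs_Ropp, pow_1_abs, Rmult_1_l, Rminus_0_l, Rplus_0_l in Hle.
  exact Hle.
Qed.

Lemma RInt_U_central_le a0 : 0 < a0 <= b / 4 -> (forall t, 0 <= t <= a0 -> U t <= 0) ->
  RInt (fun x => U x * window r 0 (b / 2) 0 x) (- (b / 2)) (b / 2)
  <= 2 * (window_const * (eps / b ^ r)) * RInt (window r 0 (b / 2) 0) 0 (b / 2)
     - RInt (window r 0 (b / 2) 0) 0 a0.
Proof.
  intros Ha Hneg. set (be := b / 2). set (Keta := window_const * (eps / b ^ r)).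
  assert (Hbe : 0 < be) by (unfold be; lra).
  assert (HKeta : 0 <= Keta).
  { pose proof eps_nonneg. pose proof window_const_pos. assert (0 < b ^ r) by (apply pow_lt; lra).
    apply Rmult_le_pos; [lra | apply Rdiv_le_0_compat; lra]. }
  set (W := window r 0 be 0).
  assert (CW : continuity W) by apply window_continuity.
  assert (CU : continuity U) by apply TmP_D_continuity.
  assert (CUW : continuity (fun x => U x * W x)) by now apply continuity_mult.
  assert (HW : forall x, - be <= x <= be -> 0 <= W x)
    by (intros x Hx; apply (window_0_bounds r 0 be x Hbe); lra).
  assert (HAleft : RInt W (- be) 0 = RInt W 0 be)
    by (apply RInt_even_sym; auto; intros x; unfold W; rewrite window_opp; simpl; ring).
  assert (I1 : RInt (fun x => U x * W x) (- be) 0 <= (-1 + Keta) * RInt W 0 be).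
  { rewrite <- HAleft. apply RInt_mult_le; auto; [lra | |]; intros x Hx.
    - apply HW; lra.
    - apply U_le_left. unfold be in *; lra. }
  assert (I2 : RInt (fun x => U x * W x) 0 a0 <= 0 * RInt W 0 a0).
  { apply RInt_mult_le; auto; [lra | |]; intros x Hx.
    - apply HW. unfold be; lra.
    - apply Hneg; lra. }
  assert (I3 : RInt (fun x => U x * W x) a0 be <= (1 + Keta) * RInt W a0 be).
  { apply RInt_mult_le; auto; [unfold be; lra | |]; intros x Hx.
    - apply HW. unfold be in *; lra.
    - apply U_le_right. unfold be in *; lra. }
  assert (HA0 : 0 <= RInt W 0 a0).
  { apply Rle_trans with (0 * (a0 - 0)); [lra |]. apply RInt_ge_const_mult; auto; [lra |].
    intros x Hx. apply HW. unfold be in *; lra. }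
  rewrite <- (RInt_Chasles_cont _ (- be) 0 be CUW), <- (RInt_Chasles_cont _ 0 a0 be CUW).
  rewrite <- (RInt_Chasles_cont W 0 a0 be CW) in I1 |- *.
  assert (Keta * RInt W 0 a0 >= 0) by (apply Rle_ge, Rmult_le_pos; lra).
  nra.
Qed.

Lemma central_estimate a0 : 0 < a0 <= b / 4 -> (forall t, 0 <= t <= a0 -> U t <= 0) ->
  a0 * ((b / 2) ^ r * (3 / 4) ^ r)
  <= 2 * window_const * (eps / b ^ r) * (b / 2 * (b / 2) ^ r) + eps * C * b.
Proof.
  intros Ha Hneg. set (be := b / 2). set (Keta := window_const * (eps / b ^ r)).
  assert (Hbe : 0 < be) by (unfold be; lra).
  assert (HKeta : 0 <= Keta).
  { pose proof eps_nonneg. pose proof window_const_pos. assert (0 < b ^ r) by (apply pow_lt; lra).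
    apply Rmult_le_pos; [lra | apply Rdiv_le_0_compat; lra]. }
  pose proof (RInt_U_central_le a0 Ha Hneg) as Hup. fold be Keta in Hup.
  pose proof (central_window be Hbe ltac:(unfold be; lra)) as Hc. apply Rabs_le_between in Hc.
  assert (HA : RInt (window r 0 be 0) 0 be <= be ^ r * (be - 0)).
  { apply RInt_le_const_mult; [lra | apply window_continuity |].
    intros x Hx. apply (window_0_bounds r 0 be x Hbe). lra. }
  assert (HA0 : be ^ r * (3 / 4) ^ r * (a0 - 0) <= RInt (window r 0 be 0) 0 a0).
  { apply RInt_ge_of_inner_bound; try lra; [apply window_continuity | |]; intros x Hx.
    - apply (window_0_bounds r 0 be x Hbe). unfold be in *; lra.
    - apply window_0_lower; auto. unfold be in *; lra. }
  assert (Keta * RInt (window r 0 be 0) 0 be <= Keta * (be ^ r * (be - 0)))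
    by (apply Rmult_le_compat_l; auto).
  replace (eps * C * b) with (eps * C * (2 * be)) by (unfold be; field).
  replace (2 * window_const * (eps / b ^ r)) with (2 * Keta) by (unfold Keta; ring).
  lra.
Qed.

Lemma U_bounded_near_0 : window_const * (eps / b ^ r) <= 1 / 2 ->
  forall x, - (b / 2) <= x <= b / 2 -> Rabs (U x) <= -3 * U 0.
Proof.
  intros Hsmall x Hx. apply Rabs_le.
  assert (Hm : U 0 <= -1 + window_const * (eps / b ^ r)) by (apply U_le_left; lra).
  destruct (Rle_or_lt 0 x).
  - assert (U 0 <= U x) by (apply U_mono_right; lra).
    assert (U x <= 1 + window_const * (eps / b ^ r)) by (apply U_le_right; lra). lra.
  - assert (U 0 <= U x) by (apply U_mono_left; lra).
    assert (U x <= -1 + window_const * (eps / b ^ r)) by (apply U_le_left; lra). lra.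
Qed.

(* [b / (216 n)] is where the local Bernstein bound [36 n M t / (b / 2)], with
   [M = -3 U 0], reaches [- U 0]. *)
Lemma U_nonpos_near_0 : window_const * (eps / b ^ r) <= 1 / 2 ->
  forall t, 0 <= t <= b / (216 * INR n) -> U t <= 0.
Proof.
  intros Hsmall t Ht.
  assert (HnR : 1 <= INR n) by (apply (le_INR 1); auto).
  assert (Hm : U 0 <= -1 + window_const * (eps / b ^ r)) by (apply U_le_left; lra).
  assert (Ht2 : t <= b / 4).
  { apply Rle_trans with (b / (216 * INR n)); [lra |].
    apply Rmult_le_reg_r with (216 * INR n); [lra |].
    unfold Rdiv. rewrite Rmult_assoc, Rinv_l by lra. nra. }
  pose proof (local_bernstein n U (-3 * U 0) (b / 2) Hn U_trig_fun ltac:(lra)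
                (U_bounded_near_0 Hsmall) t ltac:(lra)) as Hloc.
  apply Rabs_le_between in Hloc.
  assert (36 * INR n * (-3 * U 0) * t / (b / 2)
          <= 36 * INR n * (-3 * U 0) * (b / (216 * INR n)) / (b / 2)).
  { unfold Rdiv. apply Rmult_le_compat_r; [left; apply Rinv_0_lt_compat; lra |].
    apply Rmult_le_compat_l; [nra | lra]. }
  replace (36 * INR n * (-3 * U 0) * (b / (216 * INR n)) / (b / 2)) with (- U 0) in *
    by (field; lra).
  lra.
Qed.

(* The first term covers the case [window_const * eta > 1/2]; the second comes from
   [central_estimate] with [a0 = b / (216 n)]. *)
Definition lower_const : R :=
  Rmin (1 / (2 * window_const)) ((3 / 4) ^ r / (108 * (2 * window_const + 2 ^ S r * C))).

Lemma lower_const_pos : 0 < lower_const.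
Proof.
  pose proof window_const_pos. assert (0 < 2 ^ S r) by (apply pow_lt; lra).
  apply Rmin_pos; apply Rdiv_lt_0_compat; try apply pow_lt; nra.
Qed.

Theorem lower_const_le : lower_const * b ^ r <= INR n * eps.
Proof.
  pose proof eps_nonneg as He. pose proof window_const_pos as HK.
  assert (Hbr : 0 < b ^ r) by (apply pow_lt; lra).
  assert (HnR : 1 <= INR n) by (apply (le_INR 1); auto).
  set (eta := eps / b ^ r).
  assert (Heps_eta : eps = eta * b ^ r) by (unfold eta; field; lra).
  assert (Heta : 0 <= eta) by (unfold eta; apply Rdiv_le_0_compat; lra).
  rewrite Heps_eta, <- Rmult_assoc. apply Rmult_le_compat_r; [lra |].
  destruct (Rle_or_lt (window_const * eta) (1 / 2)) as [Hsmall | Hbig].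
  - apply Rle_trans with ((3 / 4) ^ r / (108 * (2 * window_const + 2 ^ S r * C))); [apply Rmin_r |].
    assert (Ha0 : 0 < b / (216 * INR n) <= b / 4).
    { split; [apply Rdiv_lt_0_compat; lra |].
      apply Rmult_le_reg_r with (216 * INR n); [lra |].
      unfold Rdiv. rewrite Rmult_assoc, Rinv_l by lra. nra. }
    pose proof (central_estimate _ Ha0 (U_nonpos_near_0 Hsmall)) as Hc. fold eta in Hc.
    set (Y := (b / 2) ^ r) in Hc. assert (HY : 0 < Y) by (apply pow_lt; lra).
    assert (Hb2 : b ^ r = 2 ^ r * Y)
      by (unfold Y; rewrite <- Rpow_mult_distr; f_equal; field).
    rewrite Heps_eta, Hb2 in Hc.
    assert (HL : 0 < 108 * (2 * window_const + 2 ^ S r * C))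
      by (assert (0 < 2 ^ S r) by (apply pow_lt; lra); nra).
    set (q := (3 / 4) ^ r) in *. set (L := 108 * (2 * window_const + 2 ^ S r * C)) in *.
    apply Rmult_le_reg_r with L; [exact HL |].
    replace (q / L * L) with q by (field; lra).
    apply Rmult_le_reg_r with (b * Y / (216 * INR n)); [apply Rdiv_lt_0_compat; nra |].
    replace (q * (b * Y / (216 * INR n))) with (b / (216 * INR n) * (Y * q)) by (field; lra).
    replace (INR n * eta * L * (b * Y / (216 * INR n)))
      with (2 * window_const * eta * (b / 2 * Y) + eta * (2 ^ r * Y) * C * b)
      by (unfold L; simpl; field; lra).
    exact Hc.
  - apply Rle_trans with (1 / (2 * window_const)); [apply Rmin_l |].
    apply Rle_trans with eta; [| nra].
    apply Rmult_le_reg_l with (2 * window_const); [lra |].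
    field_simplify; lra.
Qed.

End Main.

Lemma exists_large_of_uniform_bound (g : R -> R) (b A : R) (n : nat) :
  0 < A -> (1 <= n)%nat ->
  (forall eps, (forall x, - b <= x <= b -> Rabs (g x) <= eps) -> A <= INR n * eps) ->
  exists x, - b <= x <= b /\ INR n * Rabs (g x) >= A / 2.
Proof.
  intros HA Hn Hbound. assert (HnR : 1 <= INR n) by (apply (le_INR 1); auto).
  apply NNPP. intro Hno.
  assert (Hsmall : forall x, - b <= x <= b -> Rabs (g x) <= A / (2 * INR n)).
  { intros x Hx. apply Rnot_lt_le. intro Hlt. apply Hno. exists x. split; [exact Hx |].
    apply Rmult_lt_compat_l with (r := INR n) in Hlt; [| lra].
    replace (INR n * (A / (2 * INR n))) with (A / 2) in Hlt by (field; lra). lra. }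
  specialize (Hbound _ Hsmall).
  replace (INR n * (A / (2 * INR n))) with (A / 2) in Hbound by (field; lra). lra.
Qed.

Lemma F_0_pos x : 0 < x -> F 0 x = 1.
Proof. intros Hx. unfold F. simpl. rewrite Rabs_right by lra. field. lra. Qed.

Lemma F_0_neg x : x < 0 -> F 0 x = -1.
Proof. intros Hx. unfold F. simpl. rewrite Rabs_left by lra. field. lra. Qed.

Lemma F_0_far_from_continuous (h : R -> R) (b : R) : 0 < b -> continuity_pt h 0 ->
  exists x, - b <= x <= b /\ 1 / 2 <= Rabs (F 0 x - h x).
Proof.
  intros Hb Hh. destruct (Hh (1 / 2) ltac:(lra)) as [d [Hd Hclose]].
  set (x := Rmin (d / 2) b).
  assert (Hx : 0 < x <= b /\ x < d).
  { unfold x. pose proof (Rmin_l (d / 2) b). pose proof (Rmin_r (d / 2) b).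
    repeat split; try lra. apply Rmin_glb_lt; lra. }
  assert (Hnear : forall y, y <> 0 -> Rabs y < d -> Rabs (h y - h 0) < 1 / 2).
  { intros y Hy0 Hy. apply (Hclose y). split; [split; [exact I | auto] |].
    simpl. unfold R_dist. now rewrite Rminus_0_r. }
  pose proof (Hnear x ltac:(lra) ltac:(rewrite Rabs_right; lra)) as Hp.
  pose proof (Hnear (- x) ltac:(lra) ltac:(rewrite Rabs_left; lra)) as Hm.
  destruct (Rle_or_lt (1 / 2) (Rabs (F 0 x - h x))) as [Hbig | Hlt].
  - exists x. split; [lra | exact Hbig].
  - exists (- x). split; [lra |]. rewrite F_0_neg by lra. rewrite F_0_pos in Hlt by lra.
    apply Rabs_def2 in Hp, Hm, Hlt. apply Rnot_lt_le. intro Hlt'. apply Rabs_def2 in Hlt'. lra.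
Qed.

Theorem lemma4p2 (r : nat) :
  exists c3 : R, 0 < c3 /\
    forall (b : R) (n : nat) (T P : R -> R),
      0 < b <= PI ->
      (1 <= n)%nat ->
      is_trig_poly n T ->
      (forall t : R, Rabs t <= b -> 0 <= t * Derive_n T (S r) t) ->
      is_alg_poly r P ->
      exists x : R, -b <= x <= b /\
        INR n * Rabs (F r x + P x - T x) >= c3 * b ^ r.
Proof.
  destruct r as [|r].
  - exists (1 / 2). split; [lra |]. intros b n T P Hb Hn HT _ [p Hp].
    pose proof (trig_fun_continuity n T (is_trig_poly_trig_fun n T Hn HT)) as HTc.
    destruct (F_0_far_from_continuous (fun x => T x - p 0%nat) b) as [x [Hx Hfar]]; [lra | |].
    + apply continuity_minus; [exact HTc | apply continuity_const; now intros ? ?].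
    + exists x. split; [exact Hx |]. rewrite Hp. simpl.
      replace (F 0 x + p 0%nat * 1 - T x) with (F 0 x - (T x - p 0%nat)) by ring.
      assert (1 <= INR n) by (apply (le_INR 1); auto). nra.
  - destruct (bump_D_bounded (S r) (S r)) as [C [HC0 HC]].
    exists (lower_const (S r) C / 2). split; [pose proof (lower_const_pos (S r) C HC0); lra |].
    intros b n T P Hb Hn HT Hsign HP.
    replace (lower_const (S r) C / 2 * b ^ S r) with (lower_const (S r) C * b ^ S r / 2) by field.
    apply exists_large_of_uniform_bound; auto.
    + apply Rmult_lt_0_compat; [now apply lower_const_pos | apply pow_lt; lra].
    + intros eps Heps. apply (lower_const_le (S r) n b eps C T P); auto.
      * lia.
      * now apply is_trig_poly_trig_fun.
      * now apply is_alg_poly_poly_fun.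
Qed.
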